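(* Let $\nu\in\mathbb{R}$ and let $\phi$ be a smooth function with $\lim_{x\to\mp\infty}\phi(x)=\pm1$, $\phi'\in L^2(\mathbb{R})$ and $\int_{\mathbb{R}}(1+|x|)|\phi'(x)|\,dx<\infty$. Let $x_0:\mathbb{R}_+\to\mathbb{R}$ be continuously differentiable and let $v$ be a sufficiently regular solution of $$v_t-v_{xx}-\dot x_0 v_x-\dot x_0\phi'+\phi'v+\phi v_x+vv_x+\nu v_{xxx}=0$$ with $\int_{\mathbb{R}}|v(0,x)|^2(1+|x|)\,dx<\infty$. Assume that $t\mapsto\|v(t,\cdot)\|_{L^2}$ is nonincreasing and that there is $C_0$ such that for all $t>0$ $$\int_0^t|\dot x_0(s)|^2\,ds+\int_0^t\|v_x(s,\cdot)\|_{L^2}^2\,ds\le C_0.$$ Then there is a constant $C$ such that for every $T>0$ $$\sup_{0<t<T}\int_{\mathbb{R}}v^2(t,x)|x|\,dx+\int_0^T\|v(t,\cdot)\|_{L^2}^2\,dt\le C.$$ Consequently $\|v(t,\cdot)\|_{L^2}\le Ct^{-1/2}$ for all $t>0$, and for every $p\in(1,2)$ there is $C_p$ with $\sup_{t>0}\|v(t,\cdot)\|_{L^p}\le C_p$.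
   Context: All functions are real-valued; $\dot x_0$ denotes $dx_0/dt$ and $v_x$ the spatial derivative. *)

From Stdlib Require Import Reals.
From Coquelicot Require Import Coquelicot.
Open Scope R_scope.

(* integral over the whole real line (improper Riemann integral);
   only used for nonnegative continuous integrands, where it agrees with
   the Lebesgue integral *)
Definition integrable_R (f : R -> R) : Prop :=
  ex_RInt_gen f (Rbar_locally m_infty) (Rbar_locally p_infty).
Definition int_R (f : R -> R) : R :=
  RInt_gen f (Rbar_locally m_infty) (Rbar_locally p_infty).

Definition L2sq (f : R -> R) : R := int_R (fun x => (f x) ^ 2).
Definition L2norm (f : R -> R) : R := sqrt (L2sq f).

Definition rpow (a p : R) : R := if Rle_dec a 0 then 0 else Rpower a p.

Definition Lpnorm (p : R) (f : R -> R) : R :=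
  rpow (int_R (fun x => rpow (Rabs (f x)) p)) (/ p).

(* partial derivatives of v : R (time) -> R (space) -> R *)
Definition dx (k : nat) (v : R -> R -> R) : R -> R -> R :=
  fun t x => Derive_n (fun y => v t y) k x.
Definition dt (j : nat) (w : R -> R -> R) : R -> R -> R :=
  fun t x => Derive_n (fun s => w s x) j t.

(* "sufficiently regular": v continuous on R x R, smooth on (0,oo) x R
   (all partials d_t^j d_x^k v exist and are jointly continuous there), and
   on every strip [0,T] x R, v and the derivatives d_t^j d_x^k v (j<=1, k<=3)
   decay like (1+|x|)^(-2), uniformly in time. *)
Definition regular_solution (v : R -> R -> R) : Prop :=
  (forall t x, continuous (fun p : R * R => v (fst p) (snd p)) (t, x)) /\
  (forall k t x, ex_derive_n (fun y => v t y) k x) /\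
  (forall j k t x, 0 < t -> ex_derive_n (fun s => dx k v s x) j t) /\
  (forall j k t x, 0 < t ->
     continuous (fun p : R * R => dt j (dx k v) (fst p) (snd p)) (t, x)) /\
  (forall T, 0 < T -> exists M,
     (forall t x, 0 <= t <= T -> (1 + Rabs x) ^ 2 * Rabs (v t x) <= M) /\
     (forall j k t x, (j <= 1)%nat -> (k <= 3)%nat -> 0 < t <= T ->
        (1 + Rabs x) ^ 2 * Rabs (dt j (dx k v) t x) <= M)).

(* The weight [W0 = sqrt (1 + x^2)] turns [E(t) = int v(t)^2 W0] into a Lyapunov function.
   Multiplying the equation by [2 v W0] and integrating by parts, the drift produces
   [int v^2 (W0'' + phi W0' + nu W0''')]; since [W0' -> +-1] and [phi -> -+1] at [+-oo], this is
   at most [-1/2 ||v||^2] up to a term with the integrable weight [1/(1+x^2)], which the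
   Agmon inequality [|v|^2 <= eta ||v||^2 + ||v_x||^2 / eta] absorbs.  Hence
   [E' <= -1/4 ||v||^2 + K1 ||v_x||^2 + K2 |dx0/dt|^2], and integrating in time with the
   assumed bound [C0] gives [E(t) + 1/4 int_0^t ||v||^2 <= Q].  Monotonicity of [||v||] then
   yields [t ||v(t)||^2 <= 4 Q], and Hoelder between the weighted [L^2] bound and
   [int (1+|x|)^(-p/(2-p)) < oo] bounds the [L^p] norms. *)

From Stdlib Require Import Reals Lra Lia Psatz FunctionalExtensionality.
From Coquelicot Require Import Coquelicot.
Open Scope R_scope.

(** * Integrals over the real line *)

Local Notation at_minfty := (Rbar_locally m_infty).
Local Notation at_pinfty := (Rbar_locally p_infty).

Lemma Rabs_bounds a : a <= Rabs a /\ - Rabs a <= a /\ 0 <= Rabs a.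
Proof. unfold Rabs; destruct Rcase_abs; lra. Qed.

Lemma ball_R (x y e : R) : ball x e y <-> Rabs (y - x) < e.
Proof. split; intro H; exact H. Qed.

Definition lim_ends (F : R -> R -> R) (l : R) : Prop :=
  forall eps : posreal, exists N, forall a b, a < -N -> N < b -> Rabs (F a b - l) < eps.

Lemma lim_ends_const (c : R) : lim_ends (fun _ _ => c) c.
Proof. intros eps; exists 0; intros; rewrite Rminus_diag, Rabs_R0; apply cond_pos. Qed.

Lemma lim_ends_le (F G : R -> R -> R) A B :
  lim_ends F A -> lim_ends G B ->
  (exists N0, forall a b, a < -N0 -> N0 < b -> F a b <= G a b) -> A <= B.
Proof.
  intros HF HG [N0 H].
  apply Rnot_lt_le. intro Hlt.
  assert (He : 0 < (A - B)/2) by lra.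
  destruct (HF (mkposreal _ He)) as [N1 H1].
  destruct (HG (mkposreal _ He)) as [N2 H2]. simpl in *.
  set (N := Rabs N1 + Rabs N2 + Rabs N0 + 1).
  pose proof (Rabs_bounds N1). pose proof (Rabs_bounds N2). pose proof (Rabs_bounds N0).
  specialize (H1 (-N) N ltac:(unfold N; lra) ltac:(unfold N; lra)).
  specialize (H2 (-N) N ltac:(unfold N; lra) ltac:(unfold N; lra)).
  specialize (H (-N) N ltac:(unfold N; lra) ltac:(unfold N; lra)).
  apply Rabs_def2 in H1. apply Rabs_def2 in H2. lra.
Qed.

Definition cts (f : R -> R) := forall x, continuous f x.

Lemma cts_plus f g : cts f -> cts g -> cts (fun x => f x + g x).
Proof. intros Hf Hg x. apply (continuous_plus f g); auto. Qed.
Lemma cts_mult f g : cts f -> cts g -> cts (fun x => f x * g x).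
Proof. intros Hf Hg x. apply (continuous_mult f g); auto. Qed.
Lemma cts_opp f : cts f -> cts (fun x => - f x).
Proof. intros Hf x. apply (continuous_opp f); auto. Qed.
Lemma cts_minus f g : cts f -> cts g -> cts (fun x => f x - g x).
Proof. intros Hf Hg. apply (cts_plus f (fun x => - g x)); auto. apply cts_opp; auto. Qed.
Lemma cts_const c : cts (fun _ => c).
Proof. intros x. apply continuous_const. Qed.
Lemma cts_id : cts (fun x => x).
Proof. intros x. apply continuous_id. Qed.
Lemma cts_abs f : cts f -> cts (fun x => Rabs (f x)).
Proof.
  intros Hf x. apply (continuous_comp f Rabs); auto. apply (continuous_abs (K:=R_AbsRing)).
Qed.
Lemma cts_scal c f : cts f -> cts (fun x => c * f x).
Proof. intros Hf. apply cts_mult; auto. apply cts_const. Qed.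
Lemma cts_pow2 f : cts f -> cts (fun x => f x ^ 2).
Proof.
  intros Hf. apply (cts_mult f (fun x => f x ^ 1)); auto.
  apply (cts_mult f (fun x => 1)); auto. apply cts_const.
Qed.
Lemma cts_of_ex_derive f : (forall x, ex_derive f x) -> cts f.
Proof. intros H x. apply (ex_derive_continuous (K:=R_AbsRing) (V:=R_NormedModule)). auto. Qed.
Lemma cts_of_derive f f' : (forall x, is_derive f x (f' x)) -> cts f.
Proof. intros H. apply cts_of_ex_derive. intro x. exists (f' x); auto. Qed.

Lemma continuous_of_eps f x :
  (forall eps : posreal, exists d : posreal,
     forall y, Rabs (y - x) < d -> Rabs (f y - f x) < eps) ->
  continuous f x.
Proof.
  intros H. apply continuity_pt_filterlim.
  intros eps Heps. destruct (H (mkposreal _ Heps)) as [d Hd].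
  exists d. split. apply cond_pos.
  intros y [_ Hy]. apply Hd. exact Hy.
Qed.

Lemma eps_of_continuous f x : continuous f x ->
  forall eps : posreal, exists d : posreal,
    forall y, Rabs (y - x) < d -> Rabs (f y - f x) < eps.
Proof.
  intros H eps. apply continuity_pt_filterlim in H.
  destruct (H eps (cond_pos eps)) as [d [Hd1 Hd2]].
  exists (mkposreal _ Hd1). intros y Hy.
  destruct (Req_dec y x) as [->|Hne].
  - rewrite Rminus_diag, Rabs_R0. apply cond_pos.
  - apply Hd2. split. split; [exact I| auto]. exact Hy.
Qed.

Lemma ex_RInt_cts f a b : cts f -> ex_RInt f a b.
Proof. intros Hf. apply (ex_RInt_continuous (V:=R_CompleteNormedModule)). intros; apply Hf. Qed.

Lemma RInt_plusR f g a b : cts f -> cts g ->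
  RInt (fun x => f x + g x) a b = RInt f a b + RInt g a b.
Proof. intros Hf Hg. apply (RInt_plus (V:=R_CompleteNormedModule)); apply ex_RInt_cts; auto. Qed.
Lemma RInt_minusR f g a b : cts f -> cts g ->
  RInt (fun x => f x - g x) a b = RInt f a b - RInt g a b.
Proof. intros Hf Hg. apply (RInt_minus (V:=R_CompleteNormedModule)); apply ex_RInt_cts; auto. Qed.
Lemma RInt_scalR f c a b : cts f -> RInt (fun x => c * f x) a b = c * RInt f a b.
Proof. intros Hf. apply (RInt_scal (V:=R_CompleteNormedModule)); apply ex_RInt_cts; auto. Qed.
Lemma RInt_ChaslesR f a b c : cts f -> RInt f a b + RInt f b c = RInt f a c.
Proof. intros Hf. apply (RInt_Chasles (V:=R_CompleteNormedModule)); apply ex_RInt_cts; auto. Qed.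
Lemma RInt_swapR f a b : cts f -> RInt f b a = - RInt f a b.
Proof.
  intros Hf. rewrite <- (opp_RInt_swap (V:=R_CompleteNormedModule)); [reflexivity|].
  apply ex_RInt_cts; auto.
Qed.
Lemma RInt_leR f g a b : a <= b -> cts f -> cts g -> (forall x, f x <= g x) ->
  RInt f a b <= RInt g a b.
Proof. intros. apply RInt_le; auto; apply ex_RInt_cts; auto. Qed.
Lemma RInt_ge0R f a b : a <= b -> cts f -> (forall x, 0 <= f x) -> 0 <= RInt f a b.
Proof. intros. apply RInt_ge_0; auto; apply ex_RInt_cts; auto. Qed.

Lemma RInt_of_derive F F' a b : (forall x, is_derive F x (F' x)) -> cts F' ->
  RInt F' a b = F b - F a.
Proof.
  intros HD Hc. apply is_RInt_unique.
  apply (is_RInt_derive (V:=R_CompleteNormedModule) F F'); auto.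
Qed.

Lemma abs_RInt_le_dominated f h a b : a <= b -> cts f -> cts h ->
  (forall x, Rabs (f x) <= h x) -> Rabs (RInt f a b) <= RInt h a b.
Proof.
  intros Hab Hf Hh H.
  eapply Rle_trans. apply abs_RInt_le; auto. apply ex_RInt_cts; auto.
  apply RInt_leR; auto. apply cts_abs; auto.
Qed.

Lemma abs_RInt_le_abs_dominated f h a b : cts f -> cts h ->
  (forall x, Rabs (f x) <= h x) -> Rabs (RInt f a b) <= Rabs (RInt h a b).
Proof.
  intros Hf Hh H.
  assert (H0 : forall x, 0 <= h x) by (intro x; specialize (H x); pose proof (Rabs_pos (f x)); lra).
  destruct (Rle_dec a b).
  - rewrite (Rabs_right (RInt h a b)). apply abs_RInt_le_dominated; auto.
    apply Rle_ge, RInt_ge0R; auto.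
  - rewrite (RInt_swapR f), (RInt_swapR h); auto. rewrite !Rabs_Ropp.
    rewrite (Rabs_right (RInt h b a)). apply abs_RInt_le_dominated; auto; lra.
    apply Rle_ge, RInt_ge0R; auto; lra.
Qed.

Lemma is_RInt_gen_of_lim (f : R -> R) (l : R) :
  cts f -> lim_ends (RInt f) l -> is_RInt_gen f at_minfty at_pinfty l.
Proof.
  intros Hc H P [eps HP].
  destruct (H eps) as [N HN].
  exists (fun a => a < -N) (fun b => N < b).
  - exists (-N); auto.
  - exists N; auto.
  - intros a b Ha Hb. exists (RInt f a b). split.
    + exact (RInt_correct f a b (ex_RInt_cts f a b Hc)).
    + apply HP. apply ball_R. apply HN; auto.
Qed.

Lemma lim_of_is_RInt_gen (f : R -> R) (l : R) :
  is_RInt_gen f at_minfty at_pinfty l -> lim_ends (RInt f) l.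
Proof.
  intros H eps.
  assert (Hl : locally l (ball l eps)) by (exists eps; auto).
  destruct (H _ Hl) as [Q R' [M1 HQ] [M2 HR] HQR].
  exists (Rmax (Rabs M1) (Rabs M2)).
  intros a b Ha Hb.
  pose proof (Rmax_l (Rabs M1) (Rabs M2)). pose proof (Rmax_r (Rabs M1) (Rabs M2)).
  pose proof (Rabs_bounds M1). pose proof (Rabs_bounds M2).
  destruct (HQR a b) as [y [Hy Hy2]]; [apply HQ; lra | apply HR; lra |].
  simpl in Hy. rewrite (is_RInt_unique _ _ _ _ Hy). apply ball_R in Hy2. exact Hy2.
Qed.

Lemma ex_RInt_gen_of_cauchy (f : R -> R) : cts f ->
  (forall eps : posreal, exists N, forall a b a' b',
     a < -N -> N < b -> a' < -N -> N < b' -> Rabs (RInt f a b - RInt f a' b') < eps) ->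
  exists l, is_RInt_gen f at_minfty at_pinfty l.
Proof.
  intros Hc H.
  set (F := filtermap (fun ab : R * R => RInt f (fst ab) (snd ab))
                      (filter_prod at_minfty at_pinfty)).
  assert (HF : ProperFilter F) by (apply filtermap_proper_filter; apply filter_prod_proper).
  assert (Hcau : cauchy F).
  { intro eps. destruct (H eps) as [N HN].
    exists (RInt f (-N-1) (N+1)).
    exists (fun a => a < -N) (fun b => N < b).
    - exists (-N); auto.
    - exists N; auto.
    - intros a b Ha Hb. apply ball_R. simpl. apply HN; lra. }
  exists (lim F).
  apply is_RInt_gen_of_lim; auto.
  intro eps.
  destruct (complete_cauchy F HF Hcau eps) as [Q R' [M1 HQ] [M2 HR] HQR].
  exists (Rmax (Rabs M1) (Rabs M2)).
  intros a b Ha Hb.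
  pose proof (Rmax_l (Rabs M1) (Rabs M2)). pose proof (Rmax_r (Rabs M1) (Rabs M2)).
  pose proof (Rabs_bounds M1). pose proof (Rabs_bounds M2).
  specialize (HQR a b ltac:(apply HQ; lra) ltac:(apply HR; lra)).
  apply ball_R in HQR. exact HQR.
Qed.

Lemma int_R_unique f l : is_RInt_gen f at_minfty at_pinfty l -> int_R f = l.
Proof. intros H. unfold int_R. apply is_RInt_gen_unique; auto. Qed.

Lemma int_R_lim f : integrable_R f -> lim_ends (RInt f) (int_R f).
Proof. intros [l Hl]. rewrite (int_R_unique f l Hl). apply lim_of_is_RInt_gen; exact Hl. Qed.

Lemma int_R_ext f g : (forall x, f x = g x) -> int_R f = int_R g.
Proof. intros H. f_equal. apply functional_extensionality. auto. Qed.

Lemma integrable_R_dominated f h : cts f -> cts h -> (forall x, Rabs (f x) <= h x) ->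
  integrable_R h -> integrable_R f.
Proof.
  intros Hf Hh H Hi.
  destruct (ex_RInt_gen_of_cauchy f Hf) as [l Hl]; [| exists l; exact Hl].
  intro eps.
  assert (He : 0 < eps / 4) by (destruct eps; simpl; lra).
  destruct (int_R_lim h Hi (mkposreal _ He)) as [N HN]. simpl in HN.
  exists N. intros a b a' b' Ha Hb Ha' Hb'.
  rewrite <- (RInt_ChaslesR f a a' b), <- (RInt_ChaslesR f a' b' b); auto.
  replace (RInt f a a' + (RInt f a' b' + RInt f b' b) - RInt f a' b')
    with (RInt f a a' + RInt f b' b) by ring.
  eapply Rle_lt_trans. apply Rabs_triang.
  eapply Rle_lt_trans. apply Rplus_le_compat; apply abs_RInt_le_abs_dominated; eauto.
  pose proof (HN a b Ha Hb) as H1. pose proof (HN a' b Ha' Hb) as H2.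
  pose proof (HN a' b' Ha' Hb') as H3.
  pose proof (RInt_ChaslesR h a a' b Hh). pose proof (RInt_ChaslesR h a' b' b Hh).
  destruct eps as [e epos]; simpl in *.
  apply Rabs_def2 in H1. apply Rabs_def2 in H2. apply Rabs_def2 in H3.
  assert (Rabs (RInt h a a') < e/2) by (apply Rabs_def1; lra).
  assert (Rabs (RInt h b' b) < e/2) by (apply Rabs_def1; lra).
  lra.
Qed.

Lemma int_R_plus f g : cts f -> cts g -> integrable_R f -> integrable_R g ->
  integrable_R (fun x => f x + g x) /\ int_R (fun x => f x + g x) = int_R f + int_R g.
Proof.
  intros Hf Hg If Ig.
  assert (H : is_RInt_gen (fun x => f x + g x) at_minfty at_pinfty (int_R f + int_R g)).
  { apply is_RInt_gen_of_lim. apply cts_plus; auto.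
    intro eps. assert (He : 0 < eps/2) by (destruct eps; simpl; lra).
    destruct (int_R_lim f If (mkposreal _ He)) as [N1 H1].
    destruct (int_R_lim g Ig (mkposreal _ He)) as [N2 H2]. simpl in *.
    exists (Rmax N1 N2). intros a b Ha Hb.
    pose proof (Rmax_l N1 N2). pose proof (Rmax_r N1 N2).
    rewrite RInt_plusR; auto.
    specialize (H1 a b ltac:(lra) ltac:(lra)). specialize (H2 a b ltac:(lra) ltac:(lra)).
    apply Rabs_def2 in H1. apply Rabs_def2 in H2. apply Rabs_def1; lra. }
  split. exists (int_R f + int_R g); auto. apply int_R_unique; auto.
Qed.

Lemma int_R_scal c f : cts f -> integrable_R f ->
  integrable_R (fun x => c * f x) /\ int_R (fun x => c * f x) = c * int_R f.
Proof.
  intros Hf If.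
  assert (H : is_RInt_gen (fun x => c * f x) at_minfty at_pinfty (c * int_R f)).
  { apply is_RInt_gen_of_lim. apply cts_scal; auto.
    intro eps. assert (He : 0 < eps/(Rabs c + 1)).
    { apply Rdiv_lt_0_compat. apply cond_pos. pose proof (Rabs_pos c); lra. }
    destruct (int_R_lim f If (mkposreal _ He)) as [N1 H1]. simpl in *.
    exists N1. intros a b Ha Hb.
    rewrite RInt_scalR; auto.
    specialize (H1 a b Ha Hb).
    replace (c * RInt f a b - c * int_R f) with (c * (RInt f a b - int_R f)) by ring.
    rewrite Rabs_mult.
    assert (Hc: 0 <= Rabs c) by apply Rabs_pos.
    apply Rle_lt_trans with (Rabs c * (eps / (Rabs c + 1))).
    apply Rmult_le_compat_l; lra.
    destruct eps as [e ep]; simpl in *.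
    apply Rlt_le_trans with ((Rabs c + 1) * (e / (Rabs c + 1))).
    apply Rmult_lt_compat_r. apply Rdiv_lt_0_compat; lra. lra.
    right; field; lra. }
  split. exists (c * int_R f); auto. apply int_R_unique; auto.
Qed.

Lemma int_R_lin4 f1 f2 f3 f4 c1 c2 c3 c4 : cts f1 -> cts f2 -> cts f3 -> cts f4 ->
  integrable_R f1 -> integrable_R f2 -> integrable_R f3 -> integrable_R f4 ->
  integrable_R (fun x => c1 * f1 x + c2 * f2 x + c3 * f3 x + c4 * f4 x) /\
  int_R (fun x => c1 * f1 x + c2 * f2 x + c3 * f3 x + c4 * f4 x) =
    c1 * int_R f1 + c2 * int_R f2 + c3 * int_R f3 + c4 * int_R f4.
Proof.
  intros C1 C2 C3 C4 I1 I2 I3 I4.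
  pose proof (cts_scal c1 f1 C1) as D1. pose proof (cts_scal c2 f2 C2) as D2.
  pose proof (cts_scal c3 f3 C3) as D3. pose proof (cts_scal c4 f4 C4) as D4.
  destruct (int_R_scal c1 f1 C1 I1) as [J1 E1].
  destruct (int_R_scal c2 f2 C2 I2) as [J2 E2].
  destruct (int_R_scal c3 f3 C3 I3) as [J3 E3].
  destruct (int_R_scal c4 f4 C4 I4) as [J4 E4].
  destruct (int_R_plus _ _ D1 D2 J1 J2) as [J12 E12].
  destruct (int_R_plus _ _ (cts_plus _ _ D1 D2) D3 J12 J3) as [J123 E123].
  destruct (int_R_plus _ _ (cts_plus _ _ (cts_plus _ _ D1 D2) D3) D4 J123 J4) as [J E].
  split; auto. rewrite E, E123, E12, E1, E2, E3, E4. ring.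
Qed.

Lemma int_R_le f g : cts f -> cts g -> integrable_R f -> integrable_R g ->
  (forall x, f x <= g x) -> int_R f <= int_R g.
Proof.
  intros Hf Hg If Ig H.
  apply (lim_ends_le (RInt f) (RInt g)); try apply int_R_lim; auto.
  exists 0; intros; apply RInt_leR; auto; lra.
Qed.

Lemma int_R_ge0 f : cts f -> integrable_R f -> (forall x, 0 <= f x) -> 0 <= int_R f.
Proof.
  intros Hf If H.
  apply (lim_ends_le (fun _ _ => 0) (RInt f)); try apply int_R_lim; auto.
  apply lim_ends_const.
  exists 0; intros; apply RInt_ge0R; auto; lra.
Qed.

Lemma RInt_le_int_R g a b : cts g -> integrable_R g -> (forall x, 0 <= g x) -> a <= b ->
  RInt g a b <= int_R g.
Proof.
  intros Hg Ig H Hab.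
  apply (lim_ends_le (fun _ _ => RInt g a b) (RInt g)); try apply int_R_lim; auto.
  apply lim_ends_const.
  exists (Rabs a + Rabs b). intros a' b' Ha Hb.
  pose proof (Rabs_bounds a). pose proof (Rabs_bounds b).
  rewrite <- (RInt_ChaslesR g a' a b'), <- (RInt_ChaslesR g a b b'); auto.
  pose proof (RInt_ge0R g a' a ltac:(lra) Hg H).
  pose proof (RInt_ge0R g b b' ltac:(lra) Hg H). lra.
Qed.

Lemma int_R_tail f h a b : cts f -> cts h -> (forall x, Rabs (f x) <= h x) -> integrable_R h ->
  a <= b -> Rabs (int_R f - RInt f a b) <= int_R h - RInt h a b.
Proof.
  intros Hf Hh H Ih Hab.
  assert (If : integrable_R f) by (eapply integrable_R_dominated; eauto).
  apply (lim_ends_le (fun a' b' => Rabs (RInt f a' b' - RInt f a b))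
                     (fun a' b' => RInt h a' b' - RInt h a b)).
  - intro eps. destruct (int_R_lim f If eps) as [N HN]. exists N. intros a' b' Ha Hb.
    eapply Rle_lt_trans; [|exact (HN a' b' Ha Hb)].
    replace (RInt f a' b' - int_R f)
      with ((RInt f a' b' - RInt f a b) - (int_R f - RInt f a b)) by ring.
    apply Rabs_triang_inv2.
  - intro eps. destruct (int_R_lim h Ih eps) as [N HN]. exists N. intros a' b' Ha Hb.
    replace (RInt h a' b' - RInt h a b - (int_R h - RInt h a b))
      with (RInt h a' b' - int_R h) by ring.
    auto.
  - exists (Rabs a + Rabs b). intros a' b' Ha Hb.
    pose proof (Rabs_bounds a). pose proof (Rabs_bounds b).
    rewrite <- (RInt_ChaslesR f a' a b'), <- (RInt_ChaslesR f a b b'); auto.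
    rewrite <- (RInt_ChaslesR h a' a b'), <- (RInt_ChaslesR h a b b'); auto.
    replace (RInt f a' a + (RInt f a b + RInt f b b') - RInt f a b)
      with (RInt f a' a + RInt f b b') by ring.
    replace (RInt h a' a + (RInt h a b + RInt h b b') - RInt h a b)
      with (RInt h a' a + RInt h b b') by ring.
    eapply Rle_trans. apply Rabs_triang.
    apply Rplus_le_compat; apply abs_RInt_le_dominated; auto; lra.
Qed.

(* Monotone convergence: the least upper bound of the partial integrals is the limit. *)
Lemma integrable_R_of_RInt_bounded g K : cts g -> (forall x, 0 <= g x) ->
  (forall a b, a <= b -> RInt g a b <= K) -> integrable_R g.
Proof.
  intros Hg H HK.
  set (E := fun y => exists a b, a <= b /\ y = RInt g a b).
  assert (HE : bound E) by (exists K; intros y [a [b [Hab ->]]]; auto).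
  assert (HE2 : exists y, E y) by (exists (RInt g 0 0); exists 0, 0; split; auto; lra).
  destruct (completeness E HE HE2) as [S [HS1 HS2]].
  exists S. apply is_RInt_gen_of_lim; auto.
  intro eps.
  assert (Hex : exists a0 b0, a0 <= b0 /\ S - eps < RInt g a0 b0).
  { apply Classical_Prop.NNPP. intro Hn.
    assert (Hub : is_upper_bound E (S - eps)).
    { intros y [a [b [Hab ->]]]. apply Rnot_lt_le. intro Hl. apply Hn. exists a, b; auto. }
    specialize (HS2 _ Hub). destruct eps; simpl in *; lra. }
  destruct Hex as [a0 [b0 [Hab0 Hlt]]].
  exists (Rabs a0 + Rabs b0). intros a b Ha Hb.
  pose proof (Rabs_bounds a0). pose proof (Rabs_bounds b0).
  assert (Hup : RInt g a b <= S) by (apply HS1; exists a, b; split; auto; lra).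
  rewrite <- (RInt_ChaslesR g a a0 b), <- (RInt_ChaslesR g a0 b0 b) in *; auto.
  pose proof (RInt_ge0R g a a0 ltac:(lra) Hg H).
  pose proof (RInt_ge0R g b0 b ltac:(lra) Hg H).
  apply Rabs_def1; lra.
Qed.

Definition vanishes_at_infty (F : R -> R) :=
  forall eps : posreal, exists N, forall x, N < Rabs x -> Rabs (F x) < eps.

Lemma vanishes_at_infty_plus f g : vanishes_at_infty f -> vanishes_at_infty g ->
  vanishes_at_infty (fun x => f x + g x).
Proof.
  intros Hf Hg eps. assert (He : 0 < eps / 2) by (destruct eps; simpl; lra).
  destruct (Hf (mkposreal _ He)) as [N1 H1]. destruct (Hg (mkposreal _ He)) as [N2 H2].
  simpl in *. exists (Rmax N1 N2). intros x Hx.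
  pose proof (Rmax_l N1 N2). pose proof (Rmax_r N1 N2).
  eapply Rle_lt_trans. apply Rabs_triang.
  specialize (H1 x ltac:(lra)). specialize (H2 x ltac:(lra)). lra.
Qed.

Lemma vanishes_at_infty_ext f g : (forall x, f x = g x) ->
  vanishes_at_infty f -> vanishes_at_infty g.
Proof. intros E H eps. destruct (H eps) as [N HN]. exists N. intros. rewrite <- E. auto. Qed.

Lemma int_R_derive_vanishing F F' : (forall x, is_derive F x (F' x)) -> cts F' ->
  integrable_R F' -> vanishes_at_infty F -> int_R F' = 0.
Proof.
  intros HD Hc Hi Hv.
  apply Rabs_eq_0. apply Rle_antisym; [| apply Rabs_pos].
  apply Rle_plus_epsilon. intros e He. rewrite Rplus_0_l.
  assert (He4 : 0 < e/4) by lra.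
  destruct (int_R_lim F' Hi (mkposreal _ He4)) as [N1 H1].
  destruct (Hv (mkposreal _ He4)) as [N2 H2]. simpl in *.
  set (N := Rabs N1 + Rabs N2 + 1).
  pose proof (Rabs_bounds N1). pose proof (Rabs_bounds N2).
  specialize (H1 (-N) N ltac:(unfold N; lra) ltac:(unfold N; lra)).
  rewrite (RInt_of_derive F F') in H1; auto.
  assert (Ha : Rabs (F N) < e/4) by (apply H2; unfold N; rewrite Rabs_right; lra).
  assert (Hb : Rabs (F (-N)) < e/4) by (apply H2; unfold N; rewrite Rabs_left; lra).
  apply Rabs_def2 in H1. apply Rabs_def2 in Ha. apply Rabs_def2 in Hb.
  apply Rabs_le; lra.
Qed.

Lemma sq_increment_le_RInt u u' et a x : (forall x, is_derive u x (u' x)) -> cts u' ->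
  0 < et -> a <= x ->
  u x ^ 2 - u a ^ 2 <= RInt (fun y => et * u y ^ 2 + / et * u' y ^ 2) a x.
Proof.
  intros HD Hc' He Hax.
  assert (Hc : cts u) by (apply (cts_of_derive u u'); auto).
  set (dd := fun y : R => 2 * u y * u' y).
  assert (Cd : cts dd) by (unfold dd; apply cts_mult; [apply cts_scal|]; auto).
  assert (Hint : RInt dd a x = u x ^ 2 - u a ^ 2).
  { apply (RInt_of_derive (fun y => u y ^ 2)); auto. intro y. unfold dd.
    auto_derive. exists (u' y); auto.
    replace (Derive (fun z => u z) y) with (u' y) by (symmetry; apply is_derive_unique, HD).
    ring. }
  rewrite <- Hint. apply RInt_leR; auto.
  - apply cts_plus; apply cts_scal, cts_pow2; auto.
  - intro y. unfold dd.
    assert (0 <= (et * u y - u' y) ^ 2 / et)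
      by (apply Rmult_le_pos; [apply pow2_ge_0 | left; apply Rinv_0_lt_compat; lra]).
    replace (et * u y ^ 2 + / et * u' y ^ 2)
      with (2 * u y * u' y + (et * u y - u' y) ^ 2 / et) by (field; lra).
    lra.
Qed.

(* Agmon-type bound: integrate [(u^2)' = 2 u u' <= et u^2 + u'^2 / et] from a point far out,
   where [u] is small. *)
Lemma sq_le_L2_interp u u' et : (forall x, is_derive u x (u' x)) -> cts u' ->
  vanishes_at_infty u -> integrable_R (fun x => u x ^ 2) ->
  integrable_R (fun x => u' x ^ 2) -> 0 < et ->
  forall x, u x ^ 2 <= et * int_R (fun x => u x ^ 2) + / et * int_R (fun x => u' x ^ 2).
Proof.
  intros HD Hc' Hv I1 I2 He x.
  assert (Hc : cts u) by (apply (cts_of_derive u u'); auto).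
  assert (Cu2 : cts (fun x => u x ^ 2)) by (apply cts_pow2; auto).
  assert (Cu'2 : cts (fun x => u' x ^ 2)) by (apply cts_pow2; auto).
  set (g := fun y : R => et * u y ^ 2 + / et * u' y ^ 2).
  destruct (int_R_scal et _ Cu2 I1) as [Ia Ea].
  destruct (int_R_scal (/ et) _ Cu'2 I2) as [Ib Eb].
  destruct (int_R_plus _ _ (cts_scal et _ Cu2) (cts_scal (/et) _ Cu'2) Ia Ib) as [Ig Eg].
  fold g in Ig, Eg. rewrite Ea, Eb in Eg. rewrite <- Eg.
  assert (Hg0 : forall y, 0 <= g y).
  { intro y. unfold g. assert (0 < / et) by (apply Rinv_0_lt_compat; auto).
    pose proof (pow2_ge_0 (u y)). pose proof (pow2_ge_0 (u' y)). nra. }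
  apply Rle_plus_epsilon. intros e Hepos.
  assert (Hm : 0 < Rmin e 1) by (apply Rmin_pos; lra).
  destruct (Hv (mkposreal _ Hm)) as [N HN]. simpl in HN.
  set (a := Rmin x (- Rabs N - 1)).
  assert (Hax : a <= x) by apply Rmin_l.
  assert (Ha : Rabs (u a) < Rmin e 1).
  { apply HN; unfold a; pose proof (Rabs_bounds N).
    pose proof (Rmin_r x (- Rabs N - 1)); rewrite Rabs_left; lra. }
  assert (Hua : u a ^ 2 <= e).
  { pose proof (Rmin_l e 1). pose proof (Rmin_r e 1). pose proof (Rabs_pos (u a)).
    rewrite <- pow2_abs. nra. }
  pose proof (sq_increment_le_RInt u u' et a x HD Hc' He Hax).
  pose proof (RInt_le_int_R g a x ltac:(apply cts_plus; apply cts_scal; auto) Ig Hg0 Hax).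
  unfold g in *. lra.
Qed.

Lemma continuous_lin3 (a b c : R) (f g h : R -> R) t :
  continuous f t -> continuous g t -> continuous h t ->
  continuous (fun s => a * f s + b * g s + c * h s) t.
Proof.
  intros Hf Hg Hh.
  apply (continuous_plus (fun s => a * f s + b * g s) (fun s => c * h s)).
  apply (continuous_plus (fun s => a * f s) (fun s => b * g s)).
  all: apply (continuous_mult (K:=R_AbsRing) (fun _ : R => _)); auto using continuous_const.
Qed.

Lemma RInt_lin3 (a b c : R) (f g h : R -> R) s t :
  ex_RInt f s t -> ex_RInt g s t -> ex_RInt h s t ->
  RInt (fun x => a * f x + b * g x + c * h x) s t
  = a * RInt f s t + b * RInt g s t + c * RInt h s t.
Proof.
  intros If Ig Ih.
  assert (Jf := ex_RInt_scal (V:=R_NormedModule) f s t a If).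
  assert (Jg := ex_RInt_scal (V:=R_NormedModule) g s t b Ig).
  assert (Jh := ex_RInt_scal (V:=R_NormedModule) h s t c Ih).
  rewrite (RInt_plus (V:=R_CompleteNormedModule) (fun x => a * f x + b * g x) (fun x => c * h x));
    [| apply (ex_RInt_plus (V:=R_NormedModule)); auto | auto].
  rewrite (RInt_plus (V:=R_CompleteNormedModule) (fun x => a * f x) (fun x => b * g x)); auto.
  rewrite !(RInt_scal (V:=R_CompleteNormedModule)); auto.
Qed.

(** * Weights and decay classes *)

Definition k1 (x : R) := / (1 + x ^ 2).

Lemma one_plus_sq_pos x : 0 < 1 + x ^ 2.
Proof. nra. Qed.

Lemma cts_k1 : cts k1.
Proof.
  intro x. unfold k1. apply continuity_pt_filterlim.
  apply continuity_pt_inv. 2: pose proof (one_plus_sq_pos x); lra.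
  apply continuity_pt_plus. apply continuity_pt_const; intros ? ?; auto.
  apply derivable_continuous_pt. apply derivable_pt_pow.
Qed.

Lemma RInt_k1 a b : RInt k1 a b = atan b - atan a.
Proof.
  apply is_RInt_unique.
  apply (is_RInt_derive (V:=R_CompleteNormedModule) atan k1).
  - intros x _. unfold k1. replace (x ^ 2) with (x²) by (unfold Rsqr; ring). apply is_derive_atan.
  - intros x _. apply cts_k1.
Qed.

Lemma k1_ge0 x : 0 <= k1 x.
Proof. unfold k1. left. apply Rinv_0_lt_compat, one_plus_sq_pos. Qed.

Lemma integrable_k1 : integrable_R k1.
Proof.
  apply (integrable_R_of_RInt_bounded k1 PI cts_k1 k1_ge0).
  intros a b _. rewrite RInt_k1. pose proof (atan_bound a). pose proof (atan_bound b). lra.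
Qed.

Lemma int_k1_le : int_R k1 <= PI.
Proof.
  apply (lim_ends_le (RInt k1) (fun _ _ => PI)); try apply int_R_lim; try apply integrable_k1.
  apply lim_ends_const.
  exists 0. intros a b _ _. rewrite RInt_k1.
  pose proof (atan_bound a). pose proof (atan_bound b). lra.
Qed.

(* [W0] is a smooth substitute for the weight [1 + |x|]; [W1], [W2], [W3] are its first three
   derivatives. *)

Definition W0 (x : R) := sqrt (1 + x ^ 2).
Definition W1 (x : R) := x / W0 x.
Definition W2 (x : R) := / (W0 x ^ 3).
Definition W3 (x : R) := - 3 * x / (W0 x ^ 5).

Lemma W0_sq x : W0 x ^ 2 = 1 + x ^ 2.
Proof. unfold W0. rewrite <- Rsqr_pow2, Rsqr_sqrt; auto. nra. Qed.
Lemma W0_ge1 x : 1 <= W0 x.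
Proof. unfold W0. apply Rle_trans with (sqrt 1). rewrite sqrt_1; lra. apply sqrt_le_1_alt. nra. Qed.
Lemma W0_pos x : 0 < W0 x.
Proof. pose proof (W0_ge1 x); lra. Qed.
Lemma W0_le x : W0 x <= 1 + Rabs x.
Proof.
  pose proof (W0_sq x). pose proof (W0_pos x). pose proof (Rabs_pos x).
  assert (Hx : x ^ 2 = Rabs x ^ 2) by (rewrite pow2_abs; auto).
  nra.
Qed.
Lemma W0_ge_abs x : Rabs x <= W0 x.
Proof.
  pose proof (W0_sq x). pose proof (W0_pos x). pose proof (Rabs_pos x).
  assert (Hx : x ^ 2 = Rabs x ^ 2) by (rewrite pow2_abs; auto).
  nra.
Qed.

Lemma is_derive_W0 x : is_derive W0 x (W1 x).
Proof.
  unfold W1, W0. auto_derive. nra. replace (1 + x * (x * 1)) with (1 + x ^ 2) by ring. field.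
  apply Rgt_not_eq. apply sqrt_lt_R0. nra.
Qed.

Lemma is_derive_W1 x : is_derive W1 x (W2 x).
Proof.
  unfold W2, W1.
  assert (H := is_derive_W0 x). pose proof (W0_pos x) as Hp. pose proof (W0_sq x) as Hsq.
  auto_derive.
  - split. exists (W1 x); exact H. split; [lra|auto].
  - assert (E : Derive (fun y => W0 y) x = W1 x) by (apply is_derive_unique; exact H).
    rewrite E. unfold W1.
    replace (/ W0 x ^ 3) with ((W0 x ^ 2 - x ^ 2) / W0 x ^ 3) by (rewrite Hsq; field; lra).
    field. lra.
Qed.

Lemma is_derive_W2 x : is_derive W2 x (W3 x).
Proof.
  unfold W3, W2.
  assert (H := is_derive_W0 x). pose proof (W0_pos x) as Hp. pose proof (W0_sq x) as Hsq.
  auto_derive.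
  - split. exists (W1 x); exact H.
    split; [|auto].
    assert (0 < W0 x * (W0 x * (W0 x * 1))) by (repeat apply Rmult_lt_0_compat; lra). lra.
  - assert (E : Derive (fun y => W0 y) x = W1 x) by (apply is_derive_unique; exact H).
    rewrite E. unfold W1. field. lra.
Qed.

Lemma k1_W x : k1 x = / W0 x ^ 2.
Proof. unfold k1. rewrite W0_sq. reflexivity. Qed.

Lemma W1_abs x : Rabs (W1 x) <= 1.
Proof.
  unfold W1. pose proof (W0_ge_abs x). pose proof (W0_pos x).
  rewrite Rabs_div by lra. rewrite (Rabs_right (W0 x)) by lra.
  apply (Rmult_le_reg_r (W0 x)); auto. unfold Rdiv. rewrite Rmult_assoc, Rinv_l; lra.
Qed.

Lemma W1_sq x : W1 x ^ 2 = 1 - k1 x.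
Proof.
  rewrite k1_W. unfold W1. pose proof (W0_pos x). pose proof (W0_sq x).
  replace (1 - / W0 x ^ 2) with ((W0 x ^ 2 - 1) / W0 x ^ 2) by (field; lra).
  replace (W0 x ^ 2 - 1) with (x ^ 2) by lra. field. lra.
Qed.

Lemma W2_bounds x : 0 <= W2 x <= k1 x.
Proof.
  rewrite k1_W. unfold W2. pose proof (W0_ge1 x).
  split. left. apply Rinv_0_lt_compat. apply pow_lt; lra.
  apply Rinv_le_contravar. apply pow_lt; lra.
  replace (W0 x ^ 3) with (W0 x ^ 2 * W0 x) by ring.
  assert (0 < W0 x ^ 2) by (apply pow_lt; lra). nra.
Qed.

Lemma W3_abs_le x : Rabs (W3 x) <= 3 * k1 x.
Proof.
  rewrite k1_W. unfold W3. pose proof (W0_ge1 x). pose proof (W0_ge_abs x).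
  assert (P2 : 0 < W0 x ^ 2) by (apply pow_lt; lra).
  assert (P5 : 0 < W0 x ^ 5) by (apply pow_lt; lra).
  rewrite Rabs_div by lra. rewrite (Rabs_right (W0 x ^ 5)) by lra.
  assert (E : Rabs (- 3 * x) = 3 * Rabs x)
    by (rewrite Rabs_mult, Rabs_left by lra; f_equal; lra).
  rewrite E.
  apply (Rmult_le_reg_r (W0 x ^ 5)); auto. unfold Rdiv. rewrite Rmult_assoc, Rinv_l by lra.
  replace (3 * / W0 x ^ 2 * W0 x ^ 5) with (3 * W0 x ^ 3) by (field; lra).
  assert (W0 x <= W0 x ^ 3) by (replace (W0 x ^ 3) with (W0 x * W0 x ^ 2) by ring; nra).
  lra.
Qed.

Lemma k1_le1 x : k1 x <= 1.
Proof. unfold k1. rewrite <- Rinv_1. apply Rinv_le_contravar; [lra|]. nra. Qed.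

Lemma cts_W0 : cts W0.
Proof. apply (cts_of_derive W0 W1). apply is_derive_W0. Qed.
Lemma cts_W1 : cts W1.
Proof. apply (cts_of_derive W1 W2). apply is_derive_W1. Qed.
Lemma cts_W2 : cts W2.
Proof. apply (cts_of_derive W2 W3). apply is_derive_W2. Qed.
Lemma cts_W3 : cts W3.
Proof.
  apply cts_of_ex_derive. intro x. unfold W3.
  pose proof (W0_pos x). auto_derive. split. exists (W1 x). apply is_derive_W0.
  split; [|auto].
  assert (0 < W0 x * (W0 x * (W0 x * (W0 x * (W0 x * 1)))))
    by (repeat apply Rmult_lt_0_compat; lra).
  lra.
Qed.

Lemma is_lim_pinfty_eps f (l : R) : is_lim f p_infty l ->
  forall eps : posreal, exists M, forall x, M < x -> Rabs (f x - l) < eps.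
Proof.
  intros H eps. assert (Hl : Rbar_locally l (ball l eps)) by (exists eps; auto).
  destruct (H _ Hl) as [M HM]. exists M. intros x Hx. apply ball_R. apply HM; auto.
Qed.

Lemma is_lim_minfty_eps f (l : R) : is_lim f m_infty l ->
  forall eps : posreal, exists M, forall x, x < M -> Rabs (f x - l) < eps.
Proof.
  intros H eps. assert (Hl : Rbar_locally l (ball l eps)) by (exists eps; auto).
  destruct (H _ Hl) as [M HM]. exists M. intros x Hx. apply ball_R. apply HM; auto.
Qed.

Lemma cts_bounded_on_segment f a b : cts f -> a <= b ->
  exists B, forall x, a <= x <= b -> Rabs (f x) <= B.
Proof.
  intros Hf Hab.
  destruct (continuity_ab_maj (fun x => Rabs (f x)) a b Hab) as [m [Hm _]].
  intros c _. apply continuity_pt_filterlim. apply cts_abs; auto.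
  exists (Rabs (f m)). auto.
Qed.

Lemma front_bounds (ph : R -> R) : cts ph -> is_lim ph m_infty 1 -> is_lim ph p_infty (-1) ->
  exists R1 B, 0 < R1 /\ 0 <= B /\ (forall x, Rabs (ph x) <= B) /\
    (forall x, R1 < x -> ph x <= - 7/8) /\ (forall x, x < - R1 -> 7/8 <= ph x).
Proof.
  intros Hc Hm Hp.
  assert (He : 0 < 1/8) by lra.
  destruct (is_lim_pinfty_eps ph _ Hp (mkposreal _ He)) as [M1 H1].
  destruct (is_lim_minfty_eps ph _ Hm (mkposreal _ He)) as [M2 H2]. simpl in *.
  set (R1 := Rabs M1 + Rabs M2 + 1).
  pose proof (Rabs_bounds M1). pose proof (Rabs_bounds M2).
  destruct (cts_bounded_on_segment ph (-R1) R1 Hc) as [B HB]. unfold R1; lra.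
  exists R1, (Rabs B + 2). repeat split.
  - unfold R1; lra.
  - pose proof (Rabs_bounds B); lra.
  - intro x. pose proof (Rabs_bounds B).
    destruct (Rle_dec x R1); destruct (Rle_dec (-R1) x).
    + specialize (HB x ltac:(lra)). lra.
    + specialize (H2 x ltac:(unfold R1 in *; lra)). apply Rabs_def2 in H2. apply Rabs_le; lra.
    + specialize (H1 x ltac:(unfold R1 in *; lra)). apply Rabs_def2 in H1. apply Rabs_le; lra.
    + specialize (H1 x ltac:(unfold R1 in *; lra)). apply Rabs_def2 in H1. apply Rabs_le; lra.
  - intros x Hx. specialize (H1 x ltac:(unfold R1 in *; lra)). apply Rabs_def2 in H1. lra.
  - intros x Hx. specialize (H2 x ltac:(unfold R1 in *; lra)). apply Rabs_def2 in H2. lra.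
Qed.

(* Where [|x| > R1], [W1 = +-sqrt (1 - k1)] has the sign opposite to [ph], so [ph W1] is at most
   [-7/8 (1 - k1)]; on [[-R1, R1]] the constant term is absorbed by [k1 >= 1/(1 + R1^2)]. *)
Lemma weight_drift_le (ph : R -> R) (nu R1 B : R) : 0 < R1 -> 0 <= B ->
  (forall x, Rabs (ph x) <= B) ->
  (forall x, R1 < x -> ph x <= - 7/8) -> (forall x, x < - R1 -> 7/8 <= ph x) ->
  forall x, W2 x + ph x * W1 x + nu * W3 x <=
     - 1/2 + ((2 + B + 3 * Rabs nu) * (1 + R1 ^ 2) + 15/8 + 3 * Rabs nu) * k1 x.
Proof.
  intros HR HB Hb Hp Hm x.
  pose proof (W2_bounds x). pose proof (W3_abs_le x). pose proof (W1_abs x). pose proof (W1_sq x).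
  pose proof (k1_ge0 x). pose proof (k1_le1 x). pose proof (Rabs_bounds nu).
  assert (Hnu : nu * W3 x <= 3 * Rabs nu * k1 x).
  { eapply Rle_trans. apply RRle_abs. rewrite Rabs_mult.
    replace (3 * Rabs nu * k1 x) with (Rabs nu * (3 * k1 x)) by ring.
    apply Rmult_le_compat_l; lra. }
  set (D0 := (2 + B + 3 * Rabs nu) * (1 + R1 ^ 2)).
  assert (HD0 : 0 <= D0) by (unfold D0; apply Rmult_le_pos; [lra| nra]).
  destruct (Rlt_dec R1 x) as [Hx|Hx]; [|destruct (Rlt_dec x (- R1)) as [Hx'|Hx']].
  - specialize (Hp x Hx).
    assert (W1p : 0 <= W1 x) by (unfold W1; apply Rdiv_le_0_compat; [lra| apply W0_pos]).
    assert (W1 x >= 1 - k1 x) by nra.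
    assert (ph x * W1 x <= - 7/8 * (1 - k1 x)) by nra.
    assert (0 <= D0 * k1 x) by nra. nra.
  - specialize (Hm x Hx').
    assert (W1n : W1 x <= 0).
    { unfold W1, Rdiv. pose proof (W0_pos x).
      assert (0 < / W0 x) by (apply Rinv_0_lt_compat; lra). nra. }
    assert (W1 x <= - (1 - k1 x)) by nra.
    assert (ph x * W1 x <= - 7/8 * (1 - k1 x)) by nra.
    assert (0 <= D0 * k1 x) by nra. nra.
  - assert (Hk : 1 <= (1 + R1 ^ 2) * k1 x).
    { unfold k1. assert (x ^ 2 <= R1 ^ 2) by nra. pose proof (one_plus_sq_pos x).
      apply (Rmult_le_reg_r (1 + x ^ 2)); auto. rewrite Rmult_assoc, Rinv_l; lra. }
    assert (Rabs (ph x) * Rabs (W1 x) <= B * 1) by (apply Rmult_le_compat; auto using Rabs_pos).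
    assert (ph x * W1 x <= B) by (eapply Rle_trans; [apply RRle_abs|]; rewrite Rabs_mult; lra).
    assert ((2 + B + 3 * Rabs nu) <= D0 * k1 x) by (unfold D0; nra).
    nra.
Qed.

Definition q (x : R) := / (1 + Rabs x) ^ 2.

Lemma q_bounds x : 0 < q x /\ q x <= 1 /\ q x <= k1 x /\ q x * (1 + Rabs x) <= 1 /\
   q x * (1 + Rabs x) = / (1 + Rabs x).
Proof.
  pose proof (Rabs_pos x) as Ha.
  assert (Hp : 0 < (1 + Rabs x) ^ 2) by (apply pow_lt; lra).
  assert (Hx : x ^ 2 = Rabs x ^ 2) by (rewrite pow2_abs; auto).
  unfold q, k1. repeat split.
  - apply Rinv_0_lt_compat; auto.
  - rewrite <- Rinv_1. apply Rinv_le_contravar; [lra|]. nra.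
  - apply Rinv_le_contravar. apply one_plus_sq_pos. nra.
  - replace (/ (1 + Rabs x) ^ 2 * (1 + Rabs x)) with (/ (1 + Rabs x)) by (field; lra).
    rewrite <- Rinv_1. apply Rinv_le_contravar; lra.
  - field; lra.
Qed.

Lemma div_one_plus_abs_small (C : R) : 0 <= C ->
  forall eps : posreal, exists N, forall x, N < Rabs x -> C / (1 + Rabs x) < eps.
Proof.
  intros HC eps. exists (C / eps). intros x Hx.
  destruct eps as [e ep]; simpl in *. pose proof (Rabs_pos x).
  apply (Rmult_lt_reg_r (1 + Rabs x)). lra. unfold Rdiv. rewrite Rmult_assoc, Rinv_l by lra.
  unfold Rdiv in Hx. apply (Rmult_lt_compat_r e) in Hx; auto.
  rewrite Rmult_assoc, Rinv_l in Hx by lra. nra.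
Qed.

Definition bounded_fun (f : R -> R) := cts f /\ exists B, forall x, Rabs (f x) <= B.
Definition decays2 (f : R -> R) := cts f /\ exists C, 0 <= C /\ forall x, Rabs (f x) <= C * q x.

Lemma bounded_nonneg_bound f : bounded_fun f -> exists B, 0 <= B /\ forall x, Rabs (f x) <= B.
Proof.
  intros [_ [B HB]]. exists B. split; auto. pose proof (HB 0). pose proof (Rabs_pos (f 0)). lra.
Qed.

Lemma decays2_ext f g : (forall x, f x = g x) -> decays2 f -> decays2 g.
Proof.
  intros E [Hc [C [HC HB]]]. split.
  - intro x. apply (continuous_ext f). auto. apply Hc.
  - exists C. split; auto. intro x. rewrite <- E. auto.
Qed.

Lemma decays2_plus f g : decays2 f -> decays2 g -> decays2 (fun x => f x + g x).
Proof.
  intros [Hf [C1 [H1 B1]]] [Hg [C2 [H2 B2]]]. split. apply cts_plus; auto.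
  exists (C1 + C2). split. lra. intro x. eapply Rle_trans. apply Rabs_triang.
  specialize (B1 x). specialize (B2 x). lra.
Qed.

Lemma decays2_scal c f : decays2 f -> decays2 (fun x => c * f x).
Proof.
  intros [Hf [C1 [H1 B1]]]. split. apply cts_scal; auto.
  exists (Rabs c * C1). split. apply Rmult_le_pos; auto; apply Rabs_pos.
  intro x. rewrite Rabs_mult, Rmult_assoc. apply Rmult_le_compat_l. apply Rabs_pos. auto.
Qed.

Lemma decays2_minus f g : decays2 f -> decays2 g -> decays2 (fun x => f x - g x).
Proof.
  intros Hf Hg. apply (decays2_ext (fun x => f x + (-1) * g x)). intro; ring.
  apply decays2_plus; auto. apply decays2_scal; auto.
Qed.

Lemma decays2_mul_bounded f g : decays2 f -> bounded_fun g -> decays2 (fun x => f x * g x).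
Proof.
  intros [Hf [C1 [H1 B1]]] Hg.
  destruct (bounded_nonneg_bound g Hg) as [B [HB B2]]. destruct Hg as [Hg _].
  split. apply cts_mult; auto.
  exists (C1 * B). split. apply Rmult_le_pos; auto.
  intro x. rewrite Rabs_mult. specialize (B1 x). specialize (B2 x).
  pose proof (q_bounds x). pose proof (Rabs_pos (f x)). pose proof (Rabs_pos (g x)).
  replace (C1 * B * q x) with ((C1 * q x) * B) by ring.
  apply Rmult_le_compat; auto.
Qed.

Lemma bounded_of_decays2 f : decays2 f -> bounded_fun f.
Proof.
  intros [Hf [C1 [H1 B1]]]. split; auto. exists C1. intro x. specialize (B1 x).
  pose proof (q_bounds x). nra.
Qed.

Lemma bounded_mult f g : bounded_fun f -> bounded_fun g -> bounded_fun (fun x => f x * g x).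
Proof.
  intros Hf Hg.
  destruct (bounded_nonneg_bound f Hf) as [B1 [H1 C1]].
  destruct (bounded_nonneg_bound g Hg) as [B2 [H2 C2]].
  split. apply cts_mult; [apply Hf|apply Hg].
  exists (B1 * B2). intro x. rewrite Rabs_mult. apply Rmult_le_compat; auto using Rabs_pos.
Qed.

Lemma decays2_mul_W0 f g : decays2 f -> decays2 g -> decays2 (fun x => f x * g x * W0 x).
Proof.
  intros [Hf [C1 [H1 B1]]] [Hg [C2 [H2 B2]]].
  split. apply cts_mult. apply cts_mult; auto. apply cts_W0.
  exists (C1 * C2). split. apply Rmult_le_pos; auto.
  intro x. rewrite !Rabs_mult. specialize (B1 x). specialize (B2 x).
  destruct (q_bounds x) as [q1 [q2 [q3 [q4 q5]]]].
  pose proof (W0_le x). pose proof (W0_pos x). rewrite (Rabs_right (W0 x)) by lra.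
  pose proof (Rabs_pos (f x)). pose proof (Rabs_pos (g x)).
  apply Rle_trans with ((C1 * q x) * (C2 * q x) * (1 + Rabs x)).
  apply Rmult_le_compat; try apply Rmult_le_compat; auto; try lra; apply Rmult_le_pos; auto.
  replace (C1 * q x * (C2 * q x) * (1 + Rabs x))
    with (C1 * C2 * q x * (q x * (1 + Rabs x))) by ring.
  assert (0 <= C1 * C2 * q x) by (apply Rmult_le_pos; [apply Rmult_le_pos|]; lra).
  nra.
Qed.

Lemma integrable_R_of_decays2 f : decays2 f -> integrable_R f.
Proof.
  intros [Hf [C [HC B]]].
  apply (integrable_R_dominated f (fun x => C * k1 x)); auto. apply cts_scal, cts_k1.
  intro x. specialize (B x). pose proof (q_bounds x). nra.
  apply int_R_scal. apply cts_k1. apply integrable_k1.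
Qed.

Lemma vanishes_at_infty_decays2_W0 f : decays2 f -> vanishes_at_infty (fun x => f x * W0 x).
Proof.
  intros [Hf [C [HC B]]] eps. destruct (div_one_plus_abs_small C HC eps) as [N HN].
  exists N. intros x Hx.
  eapply Rle_lt_trans; [|apply HN; auto].
  rewrite Rabs_mult. specialize (B x).
  destruct (q_bounds x) as [q1 [q2 [q3 [q4 q5]]]].
  pose proof (W0_le x). pose proof (W0_pos x). rewrite (Rabs_right (W0 x)) by lra.
  unfold Rdiv. rewrite <- q5.
  pose proof (Rabs_pos (f x)).
  replace (C * (q x * (1 + Rabs x))) with ((C * q x) * (1 + Rabs x)) by ring.
  apply Rmult_le_compat; auto; try lra.
  exact Hx.
Qed.

Lemma vanishes_at_infty_of_decays2 f : decays2 f -> vanishes_at_infty f.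
Proof.
  intros Hf. apply (vanishes_at_infty_ext (fun x => (f x * / W0 x) * W0 x)).
  intro x. field. pose proof (W0_pos x); lra.
  apply vanishes_at_infty_decays2_W0. apply decays2_mul_bounded; auto.
  split. intro x. apply continuity_pt_filterlim. apply continuity_pt_inv.
  apply continuity_pt_filterlim, cts_W0. pose proof (W0_pos x); lra.
  exists 1. intro x. pose proof (W0_ge1 x). rewrite Rabs_right.
  rewrite <- Rinv_1. apply Rinv_le_contravar; lra.
  apply Rle_ge. left. apply Rinv_0_lt_compat. lra.
Qed.

Lemma decays2_of_bound f M : cts f -> (forall x, (1 + Rabs x) ^ 2 * Rabs (f x) <= M) -> decays2 f.
Proof.
  intros Hf H. split; auto. exists M. split.
  - specialize (H 0). pose proof (Rabs_pos (f 0)). pose proof (Rabs_pos 0). nra.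
  - intro x. specialize (H x). unfold q. pose proof (Rabs_pos x).
    assert (Hp : 0 < (1 + Rabs x) ^ 2) by (apply pow_lt; lra).
    apply (Rmult_le_reg_l ((1 + Rabs x) ^ 2)); auto.
    replace ((1 + Rabs x) ^ 2 * (M * / (1 + Rabs x) ^ 2)) with M by (field; lra). auto.
Qed.

Definition hp (dph : R -> R) (x : R) := (1 + Rabs x) * Rabs (dph x).
Definition decaysH (dph : R -> R) (f : R -> R) :=
  cts f /\ exists C, 0 <= C /\ forall x, Rabs (f x) <= C * (k1 x + hp dph x).

Lemma hp_ge0 dph x : 0 <= hp dph x.
Proof. unfold hp. apply Rmult_le_pos. pose proof (Rabs_pos x); lra. apply Rabs_pos. Qed.

Lemma decaysH_ext dph f g : (forall x, f x = g x) -> decaysH dph f -> decaysH dph g.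
Proof.
  intros E [Hc [C [HC HB]]]. split.
  - intro x. apply (continuous_ext f). auto. apply Hc.
  - exists C. split; auto. intro x. rewrite <- E. auto.
Qed.

Lemma decaysH_plus dph f g : decaysH dph f -> decaysH dph g -> decaysH dph (fun x => f x + g x).
Proof.
  intros [Hf [C1 [H1 B1]]] [Hg [C2 [H2 B2]]]. split. apply cts_plus; auto.
  exists (C1 + C2). split. lra. intro x. eapply Rle_trans. apply Rabs_triang.
  specialize (B1 x). specialize (B2 x). lra.
Qed.

Lemma decaysH_scal dph c f : decaysH dph f -> decaysH dph (fun x => c * f x).
Proof.
  intros [Hf [C1 [H1 B1]]]. split. apply cts_scal; auto.
  exists (Rabs c * C1). split. apply Rmult_le_pos; auto; apply Rabs_pos.
  intro x. rewrite Rabs_mult, Rmult_assoc. apply Rmult_le_compat_l. apply Rabs_pos. auto.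
Qed.

Lemma decaysH_minus dph f g : decaysH dph f -> decaysH dph g -> decaysH dph (fun x => f x - g x).
Proof.
  intros Hf Hg. apply (decaysH_ext dph (fun x => f x + (-1) * g x)). intro; ring.
  apply decaysH_plus; auto. apply decaysH_scal; auto.
Qed.

Lemma decaysH_of_decays2 dph f : decays2 f -> decaysH dph f.
Proof.
  intros [Hf [C [HC B]]]. split; auto. exists C. split; auto. intro x.
  specialize (B x). pose proof (q_bounds x). pose proof (hp_ge0 dph x). nra.
Qed.

Lemma decaysH_dph_W0 dph g : cts dph -> decays2 g -> decaysH dph (fun x => dph x * g x * W0 x).
Proof.
  intros Hd [Hg [C [HC B]]]. split.
  apply cts_mult. apply cts_mult; auto. apply cts_W0.
  exists C. split; auto. intro x. specialize (B x).
  destruct (q_bounds x) as [q1 [q2 [q3 [q4 q5]]]].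
  pose proof (W0_le x). pose proof (W0_pos x).
  pose proof (Rabs_pos (dph x)). pose proof (Rabs_pos (g x)).
  pose proof (k1_ge0 x).
  rewrite !Rabs_mult. rewrite (Rabs_right (W0 x)) by lra.
  apply Rle_trans with (C * hp dph x); [| nra].
  unfold hp.
  apply Rle_trans with (Rabs (dph x) * (C * q x) * (1 + Rabs x)).
  apply Rmult_le_compat; try lra. apply Rmult_le_pos; auto. apply Rmult_le_compat_l; auto.
  replace (Rabs (dph x) * (C * q x) * (1 + Rabs x))
    with (C * (q x * (1 + Rabs x)) * Rabs (dph x)) by ring.
  replace (C * ((1 + Rabs x) * Rabs (dph x))) with (C * (1 + Rabs x) * Rabs (dph x)) by ring.
  apply Rmult_le_compat_r; auto. apply Rmult_le_compat_l; auto. pose proof (Rabs_pos x). nra.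
Qed.

Lemma cts_hp dph : cts dph -> cts (hp dph).
Proof.
  intros Hd. unfold hp.
  apply cts_mult; [apply cts_plus; [apply cts_const| apply cts_abs, cts_id] | apply cts_abs; auto].
Qed.

Lemma integrable_R_of_decaysH dph f : cts dph -> integrable_R (hp dph) -> decaysH dph f ->
  integrable_R f.
Proof.
  intros Hd Ih [Hf [C [HC B]]].
  pose proof (cts_hp dph Hd) as Chp.
  apply (integrable_R_dominated f (fun x => C * (k1 x + hp dph x))); auto.
  apply cts_scal, cts_plus; auto; apply cts_k1.
  apply int_R_scal. apply cts_plus; auto; apply cts_k1.
  apply int_R_plus; auto. apply cts_k1. apply integrable_k1.
Qed.
Lemma bounded_W1 : bounded_fun W1. Proof. split. apply cts_W1. exists 1. apply W1_abs. Qed.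
Lemma bounded_W2 : bounded_fun W2.
Proof.
  split. apply cts_W2. exists 1. intro x.
  pose proof (W2_bounds x). pose proof (k1_le1 x). rewrite Rabs_right; lra.
Qed.
Lemma bounded_W3 : bounded_fun W3.
Proof.
  split. apply cts_W3. exists 3. intro x. pose proof (W3_abs_le x). pose proof (k1_le1 x). lra.
Qed.

Lemma decays2_opp f : decays2 f -> decays2 (fun x => - f x).
Proof.
  intros H. apply (decays2_ext (fun x => (-1) * f x)); [intro; ring|]. apply decays2_scal; auto.
Qed.
Lemma decay_bound_le_q (f x M : R) : (1 + Rabs x) ^ 2 * Rabs f <= M -> Rabs f <= M * q x.
Proof.
  intros H. unfold q. pose proof (Rabs_pos x).
  assert (Hp : 0 < (1 + Rabs x) ^ 2) by (apply pow_lt; lra).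
  apply (Rmult_le_reg_l ((1 + Rabs x) ^ 2)); auto.
  replace ((1 + Rabs x) ^ 2 * (M * / (1 + Rabs x) ^ 2)) with M by (field; lra). auto.
Qed.

Lemma decay_bound_nonneg (f x M : R) : (1 + Rabs x) ^ 2 * Rabs f <= M -> 0 <= M.
Proof.
  intros H. pose proof (Rabs_pos f). pose proof (Rabs_pos x).
  assert (0 <= (1 + Rabs x) ^ 2) by nra. nra.
Qed.

Lemma decay_bound_prod_W0 f g x M : (1 + Rabs x) ^ 2 * Rabs f <= M ->
  (1 + Rabs x) ^ 2 * Rabs g <= M ->
  Rabs (f * g * W0 x) <= M * M * k1 x.
Proof.
  intros Hf Hg. apply decay_bound_le_q in Hf as Hf'. apply decay_bound_le_q in Hg as Hg'.
  pose proof (decay_bound_nonneg _ _ _ Hf) as HM.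
  destruct (q_bounds x) as [q1 [q2 [q3 [q4 q5]]]].
  pose proof (W0_le x). pose proof (W0_pos x).
  rewrite !Rabs_mult, (Rabs_right (W0 x)) by lra.
  pose proof (Rabs_pos f). pose proof (Rabs_pos g).
  apply Rle_trans with ((M * q x) * (M * q x) * (1 + Rabs x)).
  apply Rmult_le_compat; try lra. apply Rmult_le_pos; auto. apply Rmult_le_compat; auto.
  replace (M * q x * (M * q x) * (1 + Rabs x)) with (M * M * q x * (q x * (1 + Rabs x))) by ring.
  assert (0 <= M * M * q x) by (apply Rmult_le_pos; [nra|lra]).
  apply Rle_trans with (M * M * q x * 1). apply Rmult_le_compat_l; auto.
  rewrite Rmult_1_r. apply Rmult_le_compat_l; nra.
Qed.

Lemma decay_bound_prod f g x M : (1 + Rabs x) ^ 2 * Rabs f <= M ->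
  (1 + Rabs x) ^ 2 * Rabs g <= M -> Rabs (f * g) <= M * M * k1 x.
Proof.
  intros Hf Hg. eapply Rle_trans; [| apply (decay_bound_prod_W0 f g x M Hf Hg)].
  rewrite (Rabs_mult _ (W0 x)), (Rabs_right (W0 x)) by (apply Rle_ge, Rlt_le, W0_pos).
  pose proof (W0_ge1 x). pose proof (Rabs_pos (f * g)). nra.
Qed.

Lemma integrable_scal_k1 C : integrable_R (fun x => C * k1 x).
Proof. apply int_R_scal. apply cts_k1. apply integrable_k1. Qed.

(** * Integrals depending on a parameter *)

Lemma continuity_2d_pt_of_continuous (F : R -> R -> R) t x :
  continuous (fun p : R * R => F (fst p) (snd p)) (t, x) -> continuity_2d_pt F t x.
Proof. intros H. apply continuity_2d_pt_filterlim. exact H. Qed.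

Lemma continuous_of_continuity_2d_pt (F : R -> R -> R) t x :
  continuity_2d_pt F t x -> continuous (F t) x.
Proof.
  intros H. apply continuous_of_eps. intro eps. destruct (H eps) as [d Hd].
  exists d. intros y Hy. apply Hd; auto. rewrite Rminus_diag, Rabs_R0. apply cond_pos.
Qed.

Lemma continuity_2d_pt_W0 t x : continuity_2d_pt (fun _ y => W0 y) t x.
Proof.
  apply (continuity_1d_2d_pt_comp W0 (fun _ y => y)). apply continuity_pt_filterlim, cts_W0.
  apply continuity_2d_pt_id2.
Qed.

Lemma continuity_2d_pt_sq (g : R -> R -> R) t x :
  continuity_2d_pt g t x -> continuity_2d_pt (fun u y => g u y ^ 2) t x.
Proof.
  intros H. apply (continuity_2d_pt_ext (fun u y => g u y * (g u y * 1))). intros; ring.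
  apply continuity_2d_pt_mult; auto. apply continuity_2d_pt_mult; auto.
  apply continuity_2d_pt_const.
Qed.

Definition cont_within (f : R -> R) (al be t0 : R) : Prop :=
  forall eps : posreal, exists d : posreal,
    forall t, al <= t <= be -> Rabs (t - t0) < d -> Rabs (f t - f t0) < eps.

Lemma continuous_of_cont_within f al be t0 : al < t0 < be ->
  cont_within f al be t0 -> continuous f t0.
Proof.
  intros Ht H. apply continuous_of_eps. intro eps.
  destruct (H eps) as [d Hd].
  assert (Hd' : 0 < Rmin d (Rmin (t0 - al) (be - t0)))
    by (apply Rmin_pos; [apply cond_pos| apply Rmin_pos; lra]).
  exists (mkposreal _ Hd'). intros y Hy. simpl in Hy.
  pose proof (Rmin_l d (Rmin (t0 - al) (be - t0))).
  pose proof (Rmin_r d (Rmin (t0 - al) (be - t0))).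
  pose proof (Rmin_l (t0 - al) (be - t0)). pose proof (Rmin_r (t0 - al) (be - t0)).
  apply Rabs_def2 in Hy as Hy'.
  apply Hd. lra. apply Rabs_def1; lra.
Qed.

Definition clamp (al be t : R) := Rmin be (Rmax al t).

Lemma clamp_in al be t : al <= be -> al <= clamp al be t <= be.
Proof. intros. unfold clamp. split. apply Rmin_glb; [lra| apply Rmax_l]. apply Rmin_l. Qed.

Lemma clamp_id al be t : al <= t <= be -> clamp al be t = t.
Proof. intros. unfold clamp. rewrite Rmax_right by lra. rewrite Rmin_right by lra. auto. Qed.

Lemma clamp_lipschitz al be t s : al <= be ->
  Rabs (clamp al be t - clamp al be s) <= Rabs (t - s).
Proof.
  intros H. unfold clamp.
  destruct (Rle_dec al t); destruct (Rle_dec al s);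
  [rewrite (Rmax_right al t), (Rmax_right al s) by lra
  | rewrite (Rmax_right al t), (Rmax_left al s) by lra
  | rewrite (Rmax_left al t), (Rmax_right al s) by lra
  | rewrite (Rmax_left al t), (Rmax_left al s) by lra];
  (destruct (Rle_dec be t); destruct (Rle_dec be s); destruct (Rle_dec be al));
  repeat first [rewrite Rmin_left by lra | rewrite Rmin_right by lra];
  apply Rabs_le; unfold Rabs; destruct Rcase_abs; lra.
Qed.

Lemma continuous_clamp (F : R -> R) al be t0 : al <= t0 <= be ->
  cont_within F al be t0 -> continuous (fun t => F (clamp al be t)) t0.
Proof.
  intros Ht H. apply continuous_of_eps. intro eps. destruct (H eps) as [d Hd]. exists d.
  intros y Hy.
  assert (E : clamp al be t0 = t0) by (apply clamp_id; lra).
  rewrite E. apply Hd. apply clamp_in; lra.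
  eapply Rle_lt_trans; [| exact Hy].
  replace (clamp al be y - t0) with (clamp al be y - clamp al be t0) by (rewrite E; ring).
  apply clamp_lipschitz; lra.
Qed.

Lemma ex_RInt_of_cont_within f a b : a <= b ->
  (forall t0, a <= t0 <= b -> cont_within f a b t0) -> ex_RInt f a b.
Proof.
  intros Hab H.
  apply (ex_RInt_ext (fun s => f (clamp a b s))).
  { intros x Hx. rewrite Rmin_left, Rmax_right in Hx by lra. rewrite clamp_id; auto. lra. }
  apply (ex_RInt_continuous (V:=R_CompleteNormedModule)). intros z Hz.
  rewrite Rmin_left, Rmax_right in Hz by lra.
  apply continuous_clamp; auto.
Qed.

Lemma RInt_param_cont_within (D : R -> R -> R) a b al be t0 :
  a <= b -> al <= t0 <= be ->
  (forall t x, al <= t <= be -> continuity_2d_pt D t x) ->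
  cont_within (fun t => RInt (D t) a b) al be t0.
Proof.
  intros Hab Ht0 Hc eps.
  assert (He' : 0 < eps / (b - a + 1)) by (apply Rdiv_lt_0_compat; [apply cond_pos|]; lra).
  destruct (uniform_continuity_2d D al be a b (fun t x Ht _ => Hc t x Ht) (mkposreal _ He'))
    as [d Hd].
  exists d. intros y Hy Hyd.
  assert (Cy : cts (D y)) by (intro x; apply continuous_of_continuity_2d_pt; apply Hc; lra).
  assert (C0 : cts (D t0)) by (intro x; apply continuous_of_continuity_2d_pt; apply Hc; lra).
  rewrite <- RInt_minusR; auto.
  eapply Rle_lt_trans. apply abs_RInt_le_const with (M := eps / (b - a + 1)); auto.
  apply ex_RInt_cts; apply cts_minus; auto.
  intros x Hx. left. apply (Hd t0 x y x); try lra. rewrite Rminus_diag, Rabs_R0. apply cond_pos.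
  destruct eps as [e ep]; simpl.
  replace ((b - a) * (e / (b - a + 1))) with (e * ((b - a) / (b - a + 1))) by (field; lra).
  assert ((b - a) / (b - a + 1) < 1).
  { apply (Rmult_lt_reg_r (b - a + 1)). lra. unfold Rdiv. rewrite Rmult_assoc, Rinv_l; lra. }
  nra.
Qed.

(* Split the line into a compact piece, where continuity is uniform, and two tails that the
   integrable majorant [h] makes uniformly small. *)
Lemma int_R_param_cont_within (g : R -> R -> R) (h : R -> R) (al be t0 : R) :
  al <= t0 <= be ->
  (forall t x, al <= t <= be -> continuity_2d_pt g t x) ->
  (forall t x, al <= t <= be -> Rabs (g t x) <= h x) -> cts h -> integrable_R h ->
  cont_within (fun t => int_R (g t)) al be t0.
Proof.
  intros Ht0 Hc Hb Ch Ih eps.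
  assert (Cg : forall t, al <= t <= be -> cts (g t))
    by (intros t Ht x; apply continuous_of_continuity_2d_pt; auto).
  assert (He4 : 0 < eps / 4) by (destruct eps; simpl; lra).
  destruct (int_R_lim h Ih (mkposreal _ He4)) as [N0 HN0]. simpl in HN0.
  set (N := Rabs N0 + 1).
  pose proof (Rabs_bounds N0).
  assert (HN : Rabs (int_R h - RInt h (-N) N) < eps / 4).
  { rewrite Rabs_minus_sym. apply HN0; unfold N; lra. }
  assert (He2 : 0 < eps / 2) by (destruct eps; simpl; lra).
  destruct (RInt_param_cont_within g (-N) N al be t0 ltac:(unfold N; lra) Ht0 Hc
              (mkposreal _ He2)) as [d Hd].
  exists d. intros t Ht Htd. specialize (Hd t Ht Htd). simpl in Hd.
  assert (T1 : Rabs (int_R (g t) - RInt (g t) (-N) N) <= int_R h - RInt h (-N) N)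
    by (apply int_R_tail; auto; unfold N; lra).
  assert (T2 : Rabs (int_R (g t0) - RInt (g t0) (-N) N) <= int_R h - RInt h (-N) N)
    by (apply int_R_tail; auto; unfold N; lra).
  apply Rabs_def2 in HN.
  replace (int_R (g t) - int_R (g t0)) with
    ((int_R (g t) - RInt (g t) (-N) N) - (int_R (g t0) - RInt (g t0) (-N) N)
     + (RInt (g t) (-N) N - RInt (g t0) (-N) N)) by ring.
  eapply Rle_lt_trans. apply Rabs_triang.
  eapply Rle_lt_trans. apply Rplus_le_compat_r. apply Rabs_triang.
  rewrite Rabs_Ropp. destruct eps; simpl in *. lra.
Qed.

Lemma locally_gt0 tau : 0 < tau -> locally tau (fun t => 0 < t).
Proof.
  intros Ht. exists (mkposreal _ Ht). intros y Hy.
  destruct (Rabs_def2 _ _ (proj1 (ball_R tau y tau) Hy)). change R in y. lra.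
Qed.

Lemma is_derive_RInt_param_R (G D : R -> R -> R) a b tau : 0 < tau ->
  (forall t x, 0 < t -> is_derive (fun s => G s x) t (D t x)) ->
  (forall t x, 0 < t -> continuity_2d_pt D t x) ->
  (forall t, 0 < t -> cts (G t)) ->
  is_derive (fun t => RInt (G t) a b) tau (RInt (D tau) a b).
Proof.
  intros Ht HD HDc HGc.
  assert (Hloc := locally_gt0 tau Ht).
  assert (E : RInt (D tau) a b = RInt (fun x => Derive (fun u => G u x) tau) a b).
  { apply RInt_ext. intros x _. symmetry. apply is_derive_unique. apply HD; auto. }
  rewrite E.
  apply (is_derive_RInt_param G a b tau).
  - destruct Hloc as [e He]. exists e. intros y Hy x _. exists (D y x). apply HD. apply He; auto.
  - intros x _. apply continuity_2d_pt_ext_loc with (f := D).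
    + exists (mkposreal _ Ht). intros u v Hu _. cbn [pos] in Hu. destruct (Rabs_def2 _ _ Hu).
      symmetry. apply is_derive_unique. apply HD. lra.
    + apply HDc; auto.
  - destruct Hloc as [e He]. exists e. intros y Hy. apply ex_RInt_cts. apply HGc. apply He; auto.
Qed.

Lemma RInt_param_increment (G D : R -> R -> R) a b t1 t2 : a <= b -> 0 < t1 <= t2 ->
  (forall t x, 0 < t -> is_derive (fun s => G s x) t (D t x)) ->
  (forall t x, 0 < t -> continuity_2d_pt D t x) ->
  (forall t, 0 < t -> cts (G t)) ->
  is_RInt (fun t => RInt (D t) a b) t1 t2 (RInt (G t2) a b - RInt (G t1) a b).
Proof.
  intros Hab Ht HD HDc HGc.
  apply (is_RInt_derive (V:=R_CompleteNormedModule) (fun t => RInt (G t) a b)).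
  - intros x Hx. rewrite Rmin_left, Rmax_right in Hx by lra.
    apply is_derive_RInt_param_R; auto; lra.
  - intros x Hx. rewrite Rmin_left, Rmax_right in Hx by lra.
    apply (continuous_of_cont_within _ (x/2) (x+1)). lra.
    apply RInt_param_cont_within; auto. lra.
    intros; apply HDc; lra.
Qed.

Section IntegralIncrement.

Variables (G D : R -> R -> R) (h gam : R -> R) (t1 t2 : R).
Hypothesis Ht : 0 < t1 <= t2.
Hypothesis HD : forall t x, 0 < t -> is_derive (fun s => G s x) t (D t x).
Hypothesis HDc : forall t x, 0 < t -> continuity_2d_pt D t x.
Hypothesis HGc : forall t, 0 < t -> cts (G t).
Hypotheses (Ch : cts h) (Ih : integrable_R h).
Hypothesis HbG : forall t x, t1 <= t <= t2 -> Rabs (G t x) <= h x.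
Hypothesis HbD : forall t x, t1 <= t <= t2 -> Rabs (D t x) <= h x.
Hypothesis Igam : ex_RInt gam t1 t2.
Hypothesis Hgam : forall t, t1 <= t <= t2 -> int_R (D t) <= gam t.

Lemma RInt_trunc_increment_le N : 0 <= N ->
  RInt (G t2) (-N) N - RInt (G t1) (-N) N
  <= RInt gam t1 t2 + (t2 - t1) * (int_R h - RInt h (-N) N).
Proof.
  intros HN.
  set (rho := int_R h - RInt h (-N) N).
  pose proof (RInt_param_increment G D (-N) N t1 t2 ltac:(lra) Ht HD HDc HGc) as Hftc.
  assert (Hle : forall t, t1 <= t <= t2 -> RInt (D t) (-N) N <= gam t + rho).
  { intros t Htt.
    assert (T : Rabs (int_R (D t) - RInt (D t) (-N) N) <= rho).
    { apply int_R_tail; auto; [| lra].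
      intro x. apply continuous_of_continuity_2d_pt, HDc. lra. }
    apply Rabs_le_between in T. specialize (Hgam t Htt). lra. }
  assert (HR : RInt (fun t => RInt (D t) (-N) N) t1 t2 <= RInt (fun t => gam t + rho) t1 t2).
  { apply RInt_le. lra. eexists; exact Hftc.
    apply (ex_RInt_plus (V:=R_NormedModule) gam (fun _ => rho)); auto. apply ex_RInt_const.
    intros; apply Hle; lra. }
  rewrite (is_RInt_unique _ _ _ _ Hftc) in HR.
  rewrite (RInt_plus (V:=R_CompleteNormedModule) gam (fun _ => rho)), RInt_const in HR; auto.
  apply ex_RInt_const.
Qed.

(* Let the truncation go to infinity: the tails of [G t1], [G t2] and of the majorant [h]
   vanish. *)
Lemma int_R_increment_le : int_R (G t2) - int_R (G t1) <= RInt gam t1 t2.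
Proof.
  apply Rle_plus_epsilon. intros e He.
  set (L := t2 - t1 + 1).
  assert (HL : 1 <= L) by (unfold L; lra).
  assert (He' : 0 < e / (3 * L)) by (apply Rdiv_lt_0_compat; lra).
  set (e' := mkposreal _ He').
  assert (IG : forall t, t1 <= t <= t2 -> integrable_R (G t))
    by (intros t Htt; apply (integrable_R_dominated _ h);
        [apply HGc; lra | auto | intros; apply HbG; lra | auto]).
  destruct (int_R_lim h Ih e') as [N0 HN0].
  destruct (int_R_lim (G t1) (IG t1 ltac:(lra)) e') as [N1 HN1].
  destruct (int_R_lim (G t2) (IG t2 ltac:(lra)) e') as [N2 HN2].
  simpl in HN0, HN1, HN2.
  set (N := Rabs N0 + Rabs N1 + Rabs N2 + 1).
  pose proof (Rabs_bounds N0). pose proof (Rabs_bounds N1). pose proof (Rabs_bounds N2).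
  specialize (HN0 (-N) N ltac:(unfold N; lra) ltac:(unfold N; lra)).
  specialize (HN1 (-N) N ltac:(unfold N; lra) ltac:(unfold N; lra)).
  specialize (HN2 (-N) N ltac:(unfold N; lra) ltac:(unfold N; lra)).
  pose proof (RInt_trunc_increment_le N ltac:(unfold N; lra)) as HR.
  apply Rabs_def2 in HN0. apply Rabs_def2 in HN1. apply Rabs_def2 in HN2.
  assert (Hrho : (t2 - t1) * (int_R h - RInt h (- N) N) <= (t2 - t1) * (e / (3 * L)))
    by (apply Rmult_le_compat_l; lra).
  assert (He3 : (t2 - t1) * (e / (3 * L)) + 2 * (e / (3 * L)) <= e).
  { replace ((t2 - t1) * (e / (3 * L)) + 2 * (e / (3 * L))) with (e * ((L + 1) / (3 * L)))
      by (unfold L; field; lra).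
    assert ((L + 1) / (3 * L) <= 1).
    { apply (Rmult_le_reg_r (3 * L)). lra. unfold Rdiv. rewrite Rmult_assoc, Rinv_l; lra. }
    nra. }
  lra.
Qed.

End IntegralIncrement.

Lemma int_R_param_sq_cont_within (g : R -> R -> R) M al be t0 : al <= t0 <= be ->
  (forall t x, al <= t <= be -> continuity_2d_pt g t x) ->
  (forall t x, al <= t <= be -> (1 + Rabs x) ^ 2 * Rabs (g t x) <= M) ->
  cont_within (fun t => int_R (fun x => g t x ^ 2)) al be t0.
Proof.
  intros Ht0 Hc Hb.
  apply (int_R_param_cont_within _ (fun x => M * M * k1 x));
    auto using cts_scal, cts_k1, integrable_scal_k1.
  - intros t x Ht. apply continuity_2d_pt_sq; auto.
  - intros t x Ht. replace (g t x ^ 2) with (g t x * g t x) by ring.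
    apply decay_bound_prod; auto.
Qed.

Lemma int_R_param_sq_W0_cont_within (g : R -> R -> R) M al be t0 : al <= t0 <= be ->
  (forall t x, al <= t <= be -> continuity_2d_pt g t x) ->
  (forall t x, al <= t <= be -> (1 + Rabs x) ^ 2 * Rabs (g t x) <= M) ->
  cont_within (fun t => int_R (fun x => g t x ^ 2 * W0 x)) al be t0.
Proof.
  intros Ht0 Hc Hb.
  apply (int_R_param_cont_within _ (fun x => M * M * k1 x));
    auto using cts_scal, cts_k1, integrable_scal_k1.
  - intros t x Ht.
    apply continuity_2d_pt_mult; auto using continuity_2d_pt_sq, continuity_2d_pt_W0.
  - intros t x Ht. replace (g t x ^ 2 * W0 x) with (g t x * g t x * W0 x) by ring.
    apply decay_bound_prod_W0; auto.
Qed.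

(** * The weighted energy inequality *)

(* [v_t] read off from the equation, with [a] standing for [dx0/dt]. *)
Definition vt_rhs (u0 u1 u2 u3 ph dph : R -> R) (a nu x : R) :=
  u2 x + a * u1 x + a * dph x - dph x * u0 x - ph x * u1 x - u0 x * u1 x - nu * u3 x.

Definition flux (u0 u1 u2 w0 w1 w2 ph : R -> R) (a nu x : R) :=
  2 * u0 x * w0 x * u1 x - u0 x ^ 2 * w1 x + a * u0 x ^ 2 * w0 x - u0 x ^ 2 * ph x * w0 x
  - 2 / 3 * u0 x ^ 3 * w0 x - 2 * nu * u0 x * u2 x * w0 x + nu * u1 x ^ 2 * w0 x
  + 2 * nu * u0 x * u1 x * w1 x - nu * u0 x ^ 2 * w2 x.

Definition ibp_density (u0 u1 w0 w1 w2 w3 ph dph : R -> R) (a nu x : R) :=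
  - 2 * u1 x ^ 2 * w0 x + u0 x ^ 2 * w2 x - a * u0 x ^ 2 * w1 x + 2 * a * dph x * u0 x * w0 x
  - dph x * u0 x ^ 2 * w0 x + u0 x ^ 2 * ph x * w1 x + 2 / 3 * u0 x ^ 3 * w1 x
  - 3 * nu * u1 x ^ 2 * w1 x + nu * u0 x ^ 2 * w3 x.

(* Integration by parts, pointwise: [2 u0 w0 u_t = flux' + ibp_density]. *)
Lemma is_derive_flux (u0 u1 u2 u3 w0 w1 w2 w3 ph dph : R -> R) (a nu x : R) :
  is_derive u0 x (u1 x) -> is_derive u1 x (u2 x) -> is_derive u2 x (u3 x) ->
  is_derive w0 x (w1 x) -> is_derive w1 x (w2 x) -> is_derive w2 x (w3 x) ->
  is_derive ph x (dph x) ->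
  is_derive (flux u0 u1 u2 w0 w1 w2 ph a nu) x
    (2 * u0 x * w0 x * vt_rhs u0 u1 u2 u3 ph dph a nu x
     - ibp_density u0 u1 w0 w1 w2 w3 ph dph a nu x).
Proof.
  intros H0 H1 H2 G0 G1 G2 P.
  unfold flux, vt_rhs, ibp_density.
  auto_derive.
  - repeat split; eexists; eauto.
  - replace (Derive (fun y => u0 y) x) with (u1 x) by (symmetry; apply is_derive_unique, H0).
    replace (Derive (fun y => u1 y) x) with (u2 x) by (symmetry; apply is_derive_unique, H1).
    replace (Derive (fun y => u2 y) x) with (u3 x) by (symmetry; apply is_derive_unique, H2).
    replace (Derive (fun y => w0 y) x) with (w1 x) by (symmetry; apply is_derive_unique, G0).
    replace (Derive (fun y => w1 y) x) with (w2 x) by (symmetry; apply is_derive_unique, G1).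
    replace (Derive (fun y => w2 y) x) with (w3 x) by (symmetry; apply is_derive_unique, G2).
    replace (Derive (fun y => ph y) x) with (dph x) by (symmetry; apply is_derive_unique, P).
    simpl. field.
Qed.

(* The constants of the energy inequality; [eta] is the Agmon parameter, chosen so that
   [K0 * eta <= 1/12]. *)
Definition K0 (D Phi A0sq : R) := 4 * D + 2 * Phi + 5/3 * A0sq.
Definition K1 (D Phi A0sq nu : R) := 3 * Rabs nu + 12 * K0 D Phi A0sq * (K0 D Phi A0sq + 1).
Definition K2 (Phi A0sq : R) := 5/2 * A0sq + Phi.
Definition eta (D Phi A0sq : R) := / (12 * (K0 D Phi A0sq + 1)).

Lemma K0_ge0 D Phi A0sq : 0 <= D -> 0 <= Phi -> 0 <= A0sq -> 0 <= K0 D Phi A0sq.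
Proof. unfold K0; lra. Qed.

Lemma abs_le_half_sq a : Rabs a <= 1/10 + 5/2 * a ^ 2.
Proof.
  rewrite <- pow2_abs. pose proof (Rabs_pos a). pose proof (pow2_ge_0 (Rabs a - 1/5)). nra.
Qed.

Lemma energy_bound_alg (nu a A2 B S2 S D Phi Phi' Ik A0sq : R) :
  0 <= A2 <= A0sq -> 0 <= B -> 0 <= D -> 0 <= Phi' <= Phi -> 0 <= Ik <= 4 -> 0 <= S ->
  S ^ 2 = S2 -> S2 = eta D Phi A0sq * A2 + / eta D Phi A0sq * B ->
  3 * Rabs nu * B + (-1/2 + Rabs a + 2/3 * S) * A2 + D * S2 * Ik + (a ^ 2 + 2 * S2) * Phi'
  <= -1/4 * A2 + K1 D Phi A0sq nu * B + K2 Phi A0sq * a ^ 2.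
Proof.
  intros HA HB HD HP HI HS HS2 HS2'.
  unfold K1, K2. unfold eta in HS2'. set (k := K0 D Phi A0sq) in *.
  assert (Hk : 0 <= k) by (apply K0_ge0; lra).
  pose proof (abs_le_half_sq a) as Ha.
  pose proof (abs_le_half_sq S) as HSa. rewrite (Rabs_right S), HS2 in HSa by lra.
  assert (Ha2 : 0 <= a ^ 2) by apply pow2_ge_0.
  assert (HS20 : 0 <= S2) by (rewrite <- HS2; apply pow2_ge_0).
  assert (T1 : Rabs a * A2 <= 1/10 * A2 + 5/2 * a ^ 2 * A0sq).
  { apply Rle_trans with ((1/10 + 5/2 * a ^ 2) * A2). apply Rmult_le_compat_r; lra. nra. }
  assert (T2 : 2/3 * S * A2 <= 1/15 * A2 + 5/3 * S2 * A0sq).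
  { apply Rle_trans with (2/3 * (1/10 + 5/2 * S2) * A2). apply Rmult_le_compat_r; lra. nra. }
  assert (T3 : D * S2 * Ik <= 4 * D * S2) by (assert (0 <= D * S2) by nra; nra).
  assert (T4 : (a ^ 2 + 2 * S2) * Phi' <= a ^ 2 * Phi + 2 * S2 * Phi) by nra.
  assert (T5 : k * S2 <= 1/12 * A2 + 12 * k * (k + 1) * B).
  { rewrite HS2', Rinv_inv.
    assert (E : k * / (12 * (k + 1)) <= 1/12).
    { apply (Rmult_le_reg_r (12 * (k + 1))). lra. rewrite Rmult_assoc, Rinv_l; lra. }
    replace (k * (/ (12 * (k + 1)) * A2 + 12 * (k + 1) * B))
      with ((k * / (12 * (k + 1))) * A2 + 12 * k * (k + 1) * B) by ring.
    nra. }
  unfold k, K0 in *.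
  assert (0 <= a ^ 2 * A0sq) by (apply Rmult_le_pos; lra).
  nra.
Qed.

Lemma mul_le_abs_mul a b c : Rabs b <= c -> a * b <= Rabs a * c.
Proof.
  intros H. eapply Rle_trans. apply RRle_abs.
  rewrite Rabs_mult. apply Rmult_le_compat_l; [apply Rabs_pos| auto].
Qed.

(* The drift bound [w2 + ph w1 + nu w3 <= -1/2 + D k] yields the damping [-1/2 u0^2]; the
   remaining terms are estimated through the sup bound [|u0| <= S]. *)
Lemma ibp_density_pointwise_le (u0 u1 w0 w1 w2 w3 ph dph a nu D S k : R) :
  0 < w0 -> Rabs w1 <= 1 -> w2 + ph * w1 + nu * w3 <= -1/2 + D * k -> 0 <= k -> 0 <= D ->
  0 <= S -> u0 ^ 2 <= S ^ 2 ->
  - 2 * u1 ^ 2 * w0 + u0 ^ 2 * w2 - a * u0 ^ 2 * w1 + 2 * a * dph * u0 * w0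
  - dph * u0 ^ 2 * w0 + u0 ^ 2 * ph * w1 + 2 / 3 * u0 ^ 3 * w1
  - 3 * nu * u1 ^ 2 * w1 + nu * u0 ^ 2 * w3
  <= 3 * Rabs nu * u1 ^ 2 + (-1/2 + Rabs a + 2/3 * S) * u0 ^ 2 + D * S ^ 2 * k
     + (a ^ 2 + 2 * S ^ 2) * (Rabs dph * w0).
Proof.
  intros Hw0 Hw1 Hc Hk HD HS Hu.
  assert (Hu0 : Rabs u0 <= S) by (rewrite <- pow2_abs in Hu; pose proof (Rabs_pos u0); nra).
  assert (Q0 : 0 <= u0 ^ 2) by apply pow2_ge_0.
  assert (Q1 : 0 <= u1 ^ 2) by apply pow2_ge_0.
  assert (Hd : 0 <= Rabs dph * w0) by (pose proof (Rabs_pos dph); nra).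
  assert (Hau : 2 * Rabs a * Rabs u0 <= a ^ 2 + S ^ 2).
  { rewrite <- pow2_abs. pose proof (Rabs_pos a). pose proof (Rabs_pos u0).
    pose proof (pow2_ge_0 (Rabs a - Rabs u0)). nra. }
  assert (T1 : u0 ^ 2 * (w2 + ph * w1 + nu * w3) <= -1/2 * u0 ^ 2 + D * S ^ 2 * k).
  { apply Rle_trans with (u0 ^ 2 * (-1/2 + D * k)). apply Rmult_le_compat_l; auto.
    assert (0 <= D * k) by nra. nra. }
  assert (T3 : (- a * u0 ^ 2) * w1 <= Rabs a * u0 ^ 2).
  { eapply Rle_trans. apply mul_le_abs_mul; eauto.
    rewrite Rabs_mult, Rabs_Ropp, (Rabs_right (u0 ^ 2)); lra. }
  assert (T4 : (2 * a * u0) * (dph * w0) <= (a ^ 2 + S ^ 2) * (Rabs dph * w0)).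
  { eapply Rle_trans. apply mul_le_abs_mul, Rle_refl.
    rewrite !Rabs_mult, (Rabs_right 2), (Rabs_right w0) by lra. nra. }
  assert (T5 : (- u0 ^ 2 * w0) * dph <= S ^ 2 * (Rabs dph * w0)).
  { eapply Rle_trans. apply mul_le_abs_mul, Rle_refl.
    rewrite Rabs_mult, Rabs_Ropp, (Rabs_right (u0 ^ 2)), (Rabs_right w0) by lra. nra. }
  assert (T6 : (2 / 3 * u0 ^ 2 * w1) * u0 <= 2/3 * S * u0 ^ 2).
  { eapply Rle_trans. apply mul_le_abs_mul; eauto.
    rewrite !Rabs_mult, (Rabs_right (2/3)), (Rabs_right (u0 ^ 2)) by lra.
    assert (0 <= u0 ^ 2 * S) by nra. pose proof (Rabs_pos w1). nra. }
  assert (T7 : (- 3 * nu * u1 ^ 2) * w1 <= 3 * Rabs nu * u1 ^ 2).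
  { eapply Rle_trans. apply mul_le_abs_mul; eauto.
    rewrite !Rabs_mult, (Rabs_left (-3)), (Rabs_right (u1 ^ 2)) by lra.
    pose proof (Rabs_pos nu). nra. }
  nra.
Qed.

Lemma decays2_sq f : decays2 f -> decays2 (fun x => f x ^ 2).
Proof.
  intros H. apply (decays2_ext (fun x => f x * f x)); [intro; ring|].
  apply decays2_mul_bounded, bounded_of_decays2; auto.
Qed.

Lemma abs_dph_W0_le_hp dph x : Rabs (Rabs (dph x) * W0 x) <= hp dph x.
Proof.
  unfold hp. pose proof (W0_le x). pose proof (W0_pos x). pose proof (Rabs_pos (dph x)).
  rewrite Rabs_mult, Rabs_Rabsolu, (Rabs_right (W0 x)) by lra. nra.
Qed.

Section EnergyRate.

Variables (u0 u1 u2 u3 ph dph : R -> R) (a nu : R).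
Hypothesis Hu01 : forall x, is_derive u0 x (u1 x).
Hypothesis Hu12 : forall x, is_derive u1 x (u2 x).
Hypothesis Hu23 : forall x, is_derive u2 x (u3 x).
Hypothesis Hph : forall x, is_derive ph x (dph x).
Hypothesis Cdph : cts dph.
Hypothesis Bph : bounded_fun ph.
Hypotheses (G0 : decays2 u0) (G1 : decays2 u1) (G2 : decays2 u2) (G3 : decays2 u3).
Hypothesis Ihp : integrable_R (hp dph).

Local Notation E := (fun x => 2 * u0 x * W0 x * vt_rhs u0 u1 u2 u3 ph dph a nu x).
Local Notation J := (ibp_density u0 u1 W0 W1 W2 W3 ph dph a nu).

Let Bu0 : bounded_fun u0 := bounded_of_decays2 u0 G0.
Let Bu1 : bounded_fun u1 := bounded_of_decays2 u1 G1.
Let Du00 : decays2 (fun y => u0 y * u0 y) := decays2_mul_bounded _ _ G0 Bu0.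

(* The integrands are first regrouped into summands matching the closure rules of [decays2]
   and [decaysH]. *)
Lemma decaysH_energy_rate : decaysH dph E.
Proof.
  apply (decaysH_ext dph (fun x =>
     ((fun y => 2 * u0 y) x
      * (fun y => u2 y + a * u1 y - ph y * u1 y - u0 y * u1 y - nu * u3 y) x * W0 x)
     + (a * (dph x * (fun y => 2 * u0 y) x * W0 x)
        - (dph x * (fun y => 2 * (u0 y * u0 y)) x * W0 x)))).
  { intro x. unfold vt_rhs. ring. }
  apply decaysH_plus.
  - apply decaysH_of_decays2. apply decays2_mul_W0. apply decays2_scal; auto.
    repeat first [apply decays2_minus | apply decays2_plus | apply decays2_scal]; auto.
    + apply (decays2_ext (fun x => u1 x * ph x)); [intro; ring|]. apply decays2_mul_bounded; auto.
    + apply decays2_mul_bounded; auto.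
  - apply decaysH_minus; [apply decaysH_scal|];
      apply decaysH_dph_W0; auto; apply decays2_scal; auto.
Qed.

Lemma decaysH_ibp_density : decaysH dph J.
Proof.
  apply (decaysH_ext dph (fun x =>
     ((fun y => -2 * u1 y) x * u1 x * W0 x)
     + (fun y => u0 y * u0 y * W2 y - a * (u0 y * u0 y * W1 y) + u0 y * u0 y * (ph y * W1 y)
          + 2/3 * (u0 y * (u0 y * u0 y) * W1 y) - 3 * nu * (u1 y * u1 y * W1 y)
          + nu * (u0 y * u0 y * W3 y)) x
     + ((2 * a) * (dph x * u0 x * W0 x) - (dph x * (fun y => u0 y * u0 y) x * W0 x)))).
  { intro x. unfold ibp_density. ring. }
  assert (Q11 : decays2 (fun y => u1 y * u1 y)) by (apply decays2_mul_bounded; auto).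
  assert (Q000 : decays2 (fun y => u0 y * (u0 y * u0 y))).
  { apply (decays2_ext (fun y => u0 y * u0 y * u0 y)); [intro; ring|].
    apply decays2_mul_bounded; auto. }
  apply decaysH_plus; [apply decaysH_plus|].
  - apply decaysH_of_decays2. apply decays2_mul_W0; auto. apply decays2_scal; auto.
  - apply decaysH_of_decays2.
    repeat first [apply decays2_minus | apply decays2_plus | apply decays2_scal];
      apply decays2_mul_bounded; auto using bounded_W1, bounded_W2, bounded_W3.
    apply bounded_mult; auto using bounded_W1.
  - apply decaysH_minus; [apply decaysH_scal|]; apply decaysH_dph_W0; auto.
Qed.

Lemma vanishes_at_infty_flux : vanishes_at_infty (flux u0 u1 u2 W0 W1 W2 ph a nu).
Proof.
  apply (vanishes_at_infty_ext (fun x =>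
    (fun y => 2 * (u0 y * u1 y) + a * (u0 y * u0 y) - u0 y * u0 y * ph y
       - 2/3 * (u0 y * u0 y * u0 y) - 2 * nu * (u2 y * u0 y) + nu * (u1 y * u1 y)) x * W0 x
    + (fun y => - (u0 y * u0 y * W1 y) + 2 * nu * (u0 y * u1 y * W1 y)
       - nu * (u0 y * u0 y * W2 y)) x)).
  { intro x. unfold flux. ring. }
  apply vanishes_at_infty_plus.
  - apply vanishes_at_infty_decays2_W0.
    repeat first [apply decays2_minus | apply decays2_plus | apply decays2_scal];
      repeat apply decays2_mul_bounded; auto.
  - apply vanishes_at_infty_of_decays2.
    repeat first
      [apply decays2_minus | apply decays2_plus | apply decays2_opp | apply decays2_scal];
      repeat apply decays2_mul_bounded; auto using bounded_W1, bounded_W2.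
Qed.

Lemma int_energy_rate_eq_ibp : int_R E = int_R J.
Proof.
  pose proof decaysH_energy_rate as HE. pose proof decaysH_ibp_density as HJ.
  set (Fp := fun x => E x - J x).
  assert (HFp : decaysH dph Fp) by (apply decaysH_minus; auto).
  assert (IJ : integrable_R J) by (apply (integrable_R_of_decaysH dph); auto).
  assert (IFp : integrable_R Fp) by (apply (integrable_R_of_decaysH dph); auto).
  assert (IF0 : int_R Fp = 0).
  { apply (int_R_derive_vanishing (flux u0 u1 u2 W0 W1 W2 ph a nu)); auto.
    - intro x. apply is_derive_flux; auto using is_derive_W0, is_derive_W1, is_derive_W2.
    - apply HFp.
    - apply vanishes_at_infty_flux. }
  rewrite (int_R_ext E (fun x => Fp x + J x)) by (intro; unfold Fp; ring).
  destruct (int_R_plus Fp J (proj1 HFp) (proj1 HJ) IFp IJ) as [_ ->]. rewrite IF0. ring.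
Qed.

(* After the Agmon bound [u0^2 <= S^2 := eta ||u0||^2 + ||u1||^2 / eta], integrate the
   pointwise estimate of the density term by term. *)
Lemma int_energy_rate_le D Phi A0sq : 0 <= D ->
  (forall x, W2 x + ph x * W1 x + nu * W3 x <= -1/2 + D * k1 x) ->
  int_R (fun x => Rabs (dph x) * W0 x) <= Phi -> L2sq u0 <= A0sq ->
  int_R E <= -1/4 * L2sq u0 + K1 D Phi A0sq nu * L2sq u1 + K2 Phi A0sq * a ^ 2.
Proof.
  intros HD Hc HPhi HA. rewrite int_energy_rate_eq_ibp.
  pose proof (decays2_sq u0 G0) as Q0. pose proof (decays2_sq u1 G1) as Q1.
  assert (I0 : integrable_R (fun y => u0 y ^ 2)) by (apply integrable_R_of_decays2; auto).
  assert (I1 : integrable_R (fun y => u1 y ^ 2)) by (apply integrable_R_of_decays2; auto).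
  assert (CdW : cts (fun x => Rabs (dph x) * W0 x))
    by (apply cts_mult; [apply cts_abs; auto| apply cts_W0]).
  assert (IdW : integrable_R (fun x => Rabs (dph x) * W0 x)).
  { apply (integrable_R_dominated _ (hp dph)); auto using cts_hp, abs_dph_W0_le_hp. }
  unfold L2sq in *.
  set (A2 := int_R (fun y => u0 y ^ 2)) in *. set (B := int_R (fun y => u1 y ^ 2)).
  set (Phi' := int_R (fun x => Rabs (dph x) * W0 x)) in *. set (Ik := int_R k1).
  assert (HA2 : 0 <= A2) by (apply int_R_ge0; auto; [apply Q0| intro; apply pow2_ge_0]).
  assert (HB : 0 <= B) by (apply int_R_ge0; auto; [apply Q1| intro; apply pow2_ge_0]).
  assert (HPhi' : 0 <= Phi').
  { apply int_R_ge0; auto. intro x. pose proof (W0_pos x). pose proof (Rabs_pos (dph x)). nra. }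
  assert (HIk : 0 <= Ik <= 4).
  { split; [apply int_R_ge0; auto using cts_k1, integrable_k1, k1_ge0|].
    pose proof int_k1_le. pose proof PI_4. unfold Ik; lra. }
  set (et := eta D Phi A0sq).
  assert (Het : 0 < et).
  { unfold et, eta. apply Rinv_0_lt_compat. pose proof (K0_ge0 D Phi A0sq HD). lra. }
  set (S2 := et * A2 + / et * B).
  assert (Sob : forall x, u0 x ^ 2 <= S2).
  { intro x. apply (sq_le_L2_interp u0 u1 et); auto.
    apply G1. apply vanishes_at_infty_of_decays2, G0. }
  assert (HS2 : 0 <= S2) by (pose proof (Sob 0); pose proof (pow2_ge_0 (u0 0)); lra).
  set (S := sqrt S2).
  assert (HS : 0 <= S) by apply sqrt_pos.
  assert (HSS : S ^ 2 = S2) by (unfold S; rewrite <- Rsqr_pow2; apply Rsqr_sqrt; auto).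
  destruct (int_R_lin4 (fun y => u1 y ^ 2) (fun y => u0 y ^ 2) k1 (fun x => Rabs (dph x) * W0 x)
      (3 * Rabs nu) (-1/2 + Rabs a + 2/3 * S) (D * S ^ 2) (a ^ 2 + 2 * S ^ 2)) as [IP EP];
    auto using cts_k1, integrable_k1; try apply Q1; try apply Q0.
  set (P := fun x => 3 * Rabs nu * u1 x ^ 2 + (-1/2 + Rabs a + 2/3 * S) * u0 x ^ 2
                     + (D * S ^ 2) * k1 x + (a ^ 2 + 2 * S ^ 2) * (Rabs (dph x) * W0 x)).
  assert (HJP : int_R J <= int_R P).
  { pose proof decaysH_ibp_density as HJ.
    apply int_R_le; auto.
    - apply HJ.
    - repeat apply cts_plus; apply cts_scal; auto using cts_k1; [apply Q1 | apply Q0].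
    - apply (integrable_R_of_decaysH dph); auto.
    - intro x. apply ibp_density_pointwise_le; auto using W0_pos, W1_abs, k1_ge0.
      rewrite HSS. apply Sob. }
  unfold P in HJP. rewrite EP in HJP. fold A2 B Phi' Ik in HJP. rewrite HSS in HJP.
  eapply Rle_trans; [exact HJP|].
  apply (energy_bound_alg nu a A2 B S2 S D Phi Phi' Ik A0sq); auto; lra.
Qed.

End EnergyRate.

(** * Interpolation for the L^p bound *)

Lemma exp_le x y : x <= y -> exp x <= exp y.
Proof.
  intros H. destruct (Rle_lt_or_eq_dec x y H) as [Hl | ->]; [left; apply exp_increasing|]; lra.
Qed.

Lemma exp_convex al s r : 0 <= al <= 1 ->
  exp (al * s + (1 - al) * r) <= al * exp s + (1 - al) * exp r.
Proof.
  intros Hal. set (m := al * s + (1 - al) * r).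
  assert (E1 : exp s = exp m * exp (s - m)) by (rewrite <- exp_plus; f_equal; ring).
  assert (E2 : exp r = exp m * exp (r - m)) by (rewrite <- exp_plus; f_equal; ring).
  pose proof (exp_ineq1_le (s - m)). pose proof (exp_ineq1_le (r - m)). pose proof (exp_pos m).
  rewrite E1, E2.
  assert (al * (exp m * (1 + (s - m))) + (1 - al) * (exp m * (1 + (r - m))) = exp m)
    by (unfold m; ring).
  assert (al * (exp m * (1 + (s - m))) <= al * (exp m * exp (s - m)))
    by (apply Rmult_le_compat_l; [lra| apply Rmult_le_compat_l; lra]).
  assert ((1 - al) * (exp m * (1 + (r - m))) <= (1 - al) * (exp m * exp (r - m)))
    by (apply Rmult_le_compat_l; [lra| apply Rmult_le_compat_l; lra]).
  lra.
Qed.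

Lemma continuity_pt_ln x : 0 < x -> continuity_pt ln x.
Proof.
  intros Hx. apply derivable_continuous_pt. exact (exist _ (/ x) (derivable_pt_lim_ln x Hx)).
Qed.

Definition wpow (r x : R) := exp (- r * ln (1 + Rabs x)).

Lemma wpow_pos r x : 0 < wpow r x.
Proof. apply exp_pos. Qed.

Lemma cts_wpow r : cts (wpow r).
Proof.
  intro x. unfold wpow. apply continuity_pt_filterlim.
  apply (continuity_pt_comp (fun x => - r * ln (1 + Rabs x)) exp).
  - apply continuity_pt_mult. apply continuity_pt_const; intros ? ?; auto.
    apply (continuity_pt_comp (fun x => 1 + Rabs x) ln).
    + apply continuity_pt_plus. apply continuity_pt_const; intros ? ?; auto. apply Rcontinuity_abs.
    + apply continuity_pt_ln. pose proof (Rabs_pos x); lra.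
  - apply derivable_continuous_pt. apply derivable_pt_exp.
Qed.

Lemma RInt_wpow_nonneg_le r B : 1 < r -> 0 <= B -> RInt (wpow r) 0 B <= / (r - 1).
Proof.
  intros Hr HB.
  set (F := fun x => - exp ((1 - r) * ln (1 + x)) / (r - 1)).
  assert (Hder : forall x, 0 <= x -> is_derive F x (wpow r x)).
  { intros x Hx. unfold F, wpow. rewrite Rabs_right by lra. auto_derive. lra.
    replace (exp ((1 - r) * ln (1 + x))) with (exp (- r * ln (1 + x)) * (1 + x)).
    field. lra.
    rewrite <- (exp_ln (1 + x)) at 2 by lra. rewrite <- exp_plus. f_equal. ring. }
  rewrite (is_RInt_unique (wpow r) 0 B (F B - F 0)).
  2: { apply (is_RInt_derive (V:=R_CompleteNormedModule) F (wpow r)).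
       - intros x Hx; rewrite Rmin_left, Rmax_right in Hx by lra; apply Hder; lra.
       - intros x _; apply cts_wpow. }
  unfold F. rewrite Rplus_0_r, ln_1, Rmult_0_r, exp_0.
  pose proof (exp_pos ((1 - r) * ln (1 + B))).
  apply (Rmult_le_reg_r (r - 1)). lra.
  rewrite Rinv_l by lra. unfold Rdiv. rewrite Rmult_minus_distr_r, !Rmult_assoc, Rinv_l by lra. lra.
Qed.

Lemma RInt_wpow_sym r A : RInt (wpow r) A 0 = RInt (wpow r) 0 (- A).
Proof.
  assert (Dopp : forall x, is_derive Ropp x (-1)) by (intro x; auto_derive; auto; ring).
  pose proof (RInt_comp (V:=R_CompleteNormedModule) (wpow r) Ropp (fun _ => -1) A 0) as E.
  rewrite Ropp_0 in E.
  rewrite (RInt_swapR (wpow r) (- A) 0), <- E.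
  2: intros; apply cts_wpow.
  2: intros; split; [apply Dopp| apply continuous_const].
  2: apply cts_wpow.
  rewrite (RInt_ext (fun y => scal (-1) (wpow r (- y))) (fun y => - wpow r y)).
  - rewrite (RInt_opp (V:=R_CompleteNormedModule)); [| apply ex_RInt_cts, cts_wpow].
    change (RInt (wpow r) A 0 = - - RInt (wpow r) A 0). symmetry; apply Ropp_involutive.
  - intros x _. unfold wpow at 1. rewrite Rabs_Ropp. change (-1 * wpow r x = - wpow r x). ring.
Qed.

Lemma integrable_wpow r : 1 < r -> integrable_R (wpow r).
Proof.
  intros Hr. apply (integrable_R_of_RInt_bounded (wpow r) (2 / (r - 1))). apply cts_wpow.
  intro; left; apply wpow_pos.
  intros a b Hab.
  set (a' := Rmin a 0). set (b' := Rmax b 0).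
  assert (Ha' : a' <= a /\ a' <= 0) by (split; [apply Rmin_l| apply Rmin_r]).
  assert (Hb' : b <= b' /\ 0 <= b') by (split; [apply Rmax_l| apply Rmax_r]).
  assert (Hc := cts_wpow r).
  assert (H0 : forall x, 0 <= wpow r x) by (intro; left; apply wpow_pos).
  apply Rle_trans with (RInt (wpow r) a' b').
  { rewrite <- (RInt_ChaslesR (wpow r) a' a b'), <- (RInt_ChaslesR (wpow r) a b b'); auto.
    pose proof (RInt_ge0R (wpow r) a' a ltac:(lra) Hc H0).
    pose proof (RInt_ge0R (wpow r) b b' ltac:(lra) Hc H0). lra. }
  rewrite <- (RInt_ChaslesR (wpow r) a' 0 b'), RInt_wpow_sym; auto.
  pose proof (RInt_wpow_nonneg_le r (- a') Hr ltac:(lra)).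
  pose proof (RInt_wpow_nonneg_le r b' Hr ltac:(lra)).
  unfold Rdiv. lra.
Qed.

Lemma rpow_nonneg a c : 0 <= rpow a c.
Proof. unfold rpow. destruct (Rle_dec a 0). lra. left. apply exp_pos. Qed.

Lemma rpow_le a b c : 0 <= a <= b -> 0 <= c -> rpow a c <= rpow b c.
Proof.
  intros Hab Hc. unfold rpow. destruct (Rle_dec a 0); destruct (Rle_dec b 0).
  - lra.
  - left; apply exp_pos.
  - lra.
  - apply Rle_Rpower_l; auto. lra.
Qed.

(* Convexity of [exp] (Young's inequality) with exponents [2/p] and [2/(2-p)], splitting
   [|y|^p = (y^2 (1+|x|))^(p/2) (1+|x|)^(-p/2)]. *)
Lemma rpow_abs_le_young p x y : 1 < p < 2 ->
  rpow (Rabs y) p <= p / 2 * (y ^ 2 * (1 + Rabs x)) + (1 - p / 2) * wpow (p / (2 - p)) x.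
Proof.
  intros Hp. pose proof (wpow_pos (p / (2 - p)) x). pose proof (Rabs_pos x).
  assert (0 <= y ^ 2 * (1 + Rabs x)) by (apply Rmult_le_pos; [apply pow2_ge_0| lra]).
  unfold rpow. destruct (Rle_dec (Rabs y) 0) as [Hz0|Hz0].
  - assert (0 <= p / 2 * (y ^ 2 * (1 + Rabs x))) by (apply Rmult_le_pos; lra).
    assert (0 <= (1 - p / 2) * wpow (p / (2 - p)) x) by (apply Rmult_le_pos; lra). lra.
  - assert (Hy : 0 < Rabs y) by lra. unfold Rpower.
    set (L := ln (1 + Rabs x)). set (ly := ln (Rabs y)).
    assert (Es : exp (2 * ly + L) = y ^ 2 * (1 + Rabs x)).
    { rewrite exp_plus. unfold L. rewrite exp_ln by lra. unfold ly.
      replace (2 * ln (Rabs y)) with (ln (Rabs y) + ln (Rabs y)) by ring.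
      rewrite exp_plus, exp_ln by lra. rewrite <- pow2_abs. ring. }
    change (wpow (p / (2 - p)) x) with (exp (- (p / (2 - p)) * L)).
    rewrite <- Es.
    replace (p * ly) with (p / 2 * (2 * ly + L) + (1 - p / 2) * (- (p / (2 - p)) * L))
      by (field; lra).
    apply exp_convex. lra.
Qed.

Lemma cts_rpow_abs p : 1 < p -> cts (fun y => rpow (Rabs y) p).
Proof.
  intros Hp y0. apply continuous_of_eps. intro eps.
  destruct (Req_dec y0 0) as [-> | Hnz].
  - assert (Hm : 0 < Rmin eps 1) by (apply Rmin_pos; [apply cond_pos| lra]).
    exists (mkposreal _ Hm). intros y Hy. simpl in Hy. rewrite Rminus_0_r in Hy.
    pose proof (Rmin_l eps 1). pose proof (Rmin_r eps 1).
    rewrite Rabs_R0. unfold rpow at 2. destruct (Rle_dec 0 0); [|lra]. rewrite Rminus_0_r.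
    rewrite Rabs_right by apply Rle_ge, rpow_nonneg.
    unfold rpow. destruct (Rle_dec (Rabs y) 0). destruct eps; simpl in *; lra.
    unfold Rpower. assert (Hy0 : 0 < Rabs y) by lra.
    assert (ln (Rabs y) <= 0) by (rewrite <- ln_1; apply ln_le; lra).
    apply Rle_lt_trans with (exp (ln (Rabs y))). apply exp_le. nra.
    rewrite exp_ln by lra. lra.
  - assert (Hy0 : 0 < Rabs y0) by (apply Rabs_pos_lt; auto).
    assert (Hc : continuous (fun y => exp (p * ln (Rabs y))) y0).
    { apply continuity_pt_filterlim.
      apply (continuity_pt_comp (fun y => p * ln (Rabs y)) exp).
      apply continuity_pt_mult. apply continuity_pt_const; intros ? ?; auto.
      apply (continuity_pt_comp Rabs ln). apply Rcontinuity_abs. apply continuity_pt_ln; auto.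
      apply derivable_continuous_pt. apply derivable_pt_exp. }
    destruct (eps_of_continuous _ _ Hc eps) as [d Hd].
    assert (Hd' : 0 < Rmin d (Rabs y0)) by (apply Rmin_pos; [apply cond_pos| lra]).
    exists (mkposreal _ Hd'). intros y Hy. simpl in Hy.
    pose proof (Rmin_l d (Rabs y0)). pose proof (Rmin_r d (Rabs y0)).
    assert (Hy1 : 0 < Rabs y).
    { pose proof (Rabs_triang_inv y0 y). rewrite <- Rabs_Ropp in Hy.
      replace (- (y - y0)) with (y0 - y) in Hy by ring. lra. }
    unfold rpow. destruct (Rle_dec (Rabs y) 0); [lra|]. destruct (Rle_dec (Rabs y0) 0); [lra|].
    unfold Rpower. apply Hd. lra.
Qed.

(* Interpolation between the weighted [L^2] bound and the integrability of
   [(1+|x|)^(-p/(2-p))]. *)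
Lemma Lpnorm_le_weighted_L2 (u : R -> R) p B : 1 < p < 2 -> cts u ->
  integrable_R (fun x => u x ^ 2 * (1 + Rabs x)) -> int_R (fun x => u x ^ 2 * (1 + Rabs x)) <= B ->
  integrable_R (fun x => rpow (Rabs (u x)) p) /\
  Lpnorm p u <= rpow (p / 2 * B + (1 - p / 2) * int_R (wpow (p / (2 - p)))) (/ p).
Proof.
  intros Hp Cu IVw HVw.
  set (r := p / (2 - p)).
  assert (Hr : 1 < r).
  { unfold r. apply (Rmult_lt_reg_r (2 - p)). lra. unfold Rdiv. rewrite Rmult_assoc, Rinv_l; lra. }
  set (Vw := fun x => u x ^ 2 * (1 + Rabs x)) in *.
  assert (CVw : cts Vw).
  { unfold Vw. apply cts_mult; [apply cts_pow2; auto|].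
    apply cts_plus; [apply cts_const| apply cts_abs, cts_id]. }
  set (RP := fun x => rpow (Rabs (u x)) p).
  assert (CRP : cts RP).
  { intro x. unfold RP. apply (continuous_comp u (fun y => rpow (Rabs y) p)); auto.
    apply cts_rpow_abs; lra. }
  set (H := fun x => p / 2 * Vw x + (1 - p / 2) * wpow r x).
  assert (CH : cts H) by (apply cts_plus; apply cts_scal; auto; apply cts_wpow).
  destruct (int_R_scal (p / 2) Vw CVw IVw) as [I1 E1].
  destruct (int_R_scal (1 - p / 2) (wpow r) (cts_wpow r) (integrable_wpow r Hr)) as [I2 E2].
  destruct (int_R_plus _ _ (cts_scal (p/2) Vw CVw) (cts_scal (1 - p/2) _ (cts_wpow r)) I1 I2)
    as [IH EH].
  assert (HRP : forall x, RP x <= H x) by (intro x; apply rpow_abs_le_young; auto).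
  assert (IRP : integrable_R RP).
  { apply (integrable_R_dominated RP H); auto. intro x.
    rewrite Rabs_right; [auto| apply Rle_ge, rpow_nonneg]. }
  split; auto.
  unfold Lpnorm. apply rpow_le; [split|].
  - apply int_R_ge0; auto. intro; apply rpow_nonneg.
  - apply Rle_trans with (int_R H). apply int_R_le; auto.
    unfold H. rewrite EH, E1, E2.
    assert (p / 2 * int_R Vw <= p / 2 * B) by (apply Rmult_le_compat_l; lra). lra.
  - left. apply Rinv_0_lt_compat. lra.
Qed.

(** * The solution *)

Definition energy (v : R -> R -> R) (t : R) := int_R (fun x => v t x ^ 2 * W0 x).

Section Solution.

Variables (nu : R) (phi x0 : R -> R) (v : R -> R -> R) (C0 : R).
Hypothesis Hphi_smooth : forall n x, ex_derive_n phi n x.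
Hypothesis Hphi_m : is_lim phi m_infty 1.
Hypothesis Hphi_p : is_lim phi p_infty (-1).
Hypothesis Hphi_L1w : integrable_R (fun x => (1 + Rabs x) * Rabs (Derive phi x)).
Hypothesis Hx0 : forall t, 0 <= t -> ex_derive x0 t /\ continuous (Derive x0) t.
Hypothesis Hreg : regular_solution v.
Hypothesis Heq : forall t x, 0 < t ->
  dt 1 v t x - dx 2 v t x - Derive x0 t * dx 1 v t x
  - Derive x0 t * Derive phi x + Derive phi x * v t x
  + phi x * dx 1 v t x + v t x * dx 1 v t x + nu * dx 3 v t x = 0.
Hypothesis Hmono : forall s t, 0 <= s <= t -> L2norm (v t) <= L2norm (v s).
Hypothesis HC0 : forall t, 0 < t ->
  ex_RInt (fun s => (Rabs (Derive x0 s)) ^ 2) 0 t /\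
  ex_RInt (fun s => L2sq (dx 1 v s)) 0 t /\
  RInt (fun s => (Rabs (Derive x0 s)) ^ 2) 0 t + RInt (fun s => L2sq (dx 1 v s)) 0 t <= C0.

Lemma is_derive_dx t k x : is_derive (dx k v t) x (dx (S k) v t x).
Proof.
  destruct Hreg as [_ [H2 _]]. specialize (H2 (S k) t x).
  simpl in H2. unfold dx. simpl. apply Derive_correct. exact H2.
Qed.

Lemma cts_dx t k : cts (dx k v t).
Proof. apply (cts_of_derive _ (dx (S k) v t)). intro; apply is_derive_dx. Qed.

Lemma cts_v t : cts (v t).
Proof. apply (cts_dx t 0). Qed.

Lemma continuity_2d_v t x : continuity_2d_pt v t x.
Proof. destruct Hreg as [H1 _]. apply continuity_2d_pt_of_continuous. apply H1. Qed.

Lemma continuity_2d_dt_dx j k t x : 0 < t -> continuity_2d_pt (dt j (dx k v)) t x.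
Proof.
  intros Ht. destruct Hreg as [_ [_ [_ [H4 _]]]]. apply continuity_2d_pt_of_continuous.
  exact (H4 j k t x Ht).
Qed.

Lemma is_derive_v_time t x : 0 < t -> is_derive (fun s => v s x) t (dt 1 v t x).
Proof.
  intros Ht. destruct Hreg as [_ [_ [H3 _]]]. specialize (H3 1%nat 0%nat t x Ht).
  simpl in H3. unfold dt. simpl. apply Derive_correct. exact H3.
Qed.

Lemma decay_bounds T : 0 < T -> exists M,
  (forall t x, 0 <= t <= T -> (1 + Rabs x) ^ 2 * Rabs (v t x) <= M) /\
  (forall k t x, (k <= 3)%nat -> 0 < t <= T -> (1 + Rabs x) ^ 2 * Rabs (dx k v t x) <= M) /\
  (forall t x, 0 < t <= T -> (1 + Rabs x) ^ 2 * Rabs (dt 1 v t x) <= M).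
Proof.
  intros HT. destruct Hreg as [_ [_ [_ [_ H5]]]]. destruct (H5 T HT) as [M [HM1 HM2]].
  exists M. split; auto. split.
  - intros k t x Hk Ht. exact (HM2 0%nat k t x ltac:(lia) Hk Ht).
  - intros t x Ht. exact (HM2 1%nat 0%nat t x ltac:(lia) ltac:(lia) Ht).
Qed.

Lemma decays2_v t : 0 <= t -> decays2 (v t).
Proof.
  intros Ht. destruct (decay_bounds (t + 1) ltac:(lra)) as [M [HM _]].
  apply (decays2_of_bound _ M). apply cts_v. intros; apply HM; lra.
Qed.

Lemma decays2_dx k t : (k <= 3)%nat -> 0 < t -> decays2 (dx k v t).
Proof.
  intros Hk Ht. destruct (decay_bounds t Ht) as [M [_ [HM _]]].
  apply (decays2_of_bound _ M). apply cts_dx. intros; apply HM; auto; lra.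
Qed.

Lemma integrable_sq_v t : 0 <= t -> integrable_R (fun x => v t x ^ 2).
Proof. intros Ht. apply integrable_R_of_decays2, decays2_sq, decays2_v; auto. Qed.

Lemma L2sq_v_ge0 t : 0 <= t -> 0 <= L2sq (v t).
Proof.
  intros Ht. apply int_R_ge0; auto using integrable_sq_v, pow2_ge_0. apply cts_pow2, cts_v.
Qed.

Lemma L2sq_dx_ge0 t : 0 < t -> 0 <= L2sq (dx 1 v t).
Proof.
  intros Ht. pose proof (decays2_sq _ (decays2_dx 1 t ltac:(lia) Ht)) as H.
  apply int_R_ge0; auto using integrable_R_of_decays2, pow2_ge_0. apply H.
Qed.

Lemma L2sq_v_nonincreasing s t : 0 <= s <= t -> L2sq (v t) <= L2sq (v s).
Proof.
  intros H. apply sqrt_le_0; [apply L2sq_v_ge0; lra | apply L2sq_v_ge0; lra | apply Hmono; auto].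
Qed.

Lemma integrable_energy t : 0 <= t -> integrable_R (fun x => v t x ^ 2 * W0 x).
Proof.
  intros Ht. apply integrable_R_of_decays2.
  apply (decays2_ext (fun x => v t x * v t x * W0 x)); [intro; ring|].
  apply decays2_mul_W0; apply decays2_v; auto.
Qed.

Lemma energy_ge0 t : 0 <= t -> 0 <= energy v t.
Proof.
  intros Ht. apply int_R_ge0; auto using integrable_energy.
  - apply cts_mult; [apply cts_pow2, cts_v | apply cts_W0].
  - intro x. pose proof (W0_pos x). pose proof (pow2_ge_0 (v t x)). nra.
Qed.

Lemma L2sq_v_cont_within T t0 : 0 < T -> 0 <= t0 <= T ->
  cont_within (fun t => L2sq (v t)) 0 T t0.
Proof.
  intros HT Ht0. destruct (decay_bounds T HT) as [M [HM _]].
  apply (int_R_param_sq_cont_within v M); auto using continuity_2d_v.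
Qed.

Lemma ex_RInt_L2sq_v T : 0 < T -> ex_RInt (fun s => L2sq (v s)) 0 T.
Proof.
  intros HT. apply ex_RInt_of_cont_within; [lra|]. intros; apply L2sq_v_cont_within; lra.
Qed.

Lemma continuous_L2sq_v t : 0 < t -> continuous (fun s => L2sq (v s)) t.
Proof.
  intros Ht. apply (continuous_of_cont_within _ 0 (t + 1)); [lra|].
  apply L2sq_v_cont_within; lra.
Qed.

Lemma continuous_L2sq_dx t : 0 < t -> continuous (fun s => L2sq (dx 1 v s)) t.
Proof.
  intros Ht. destruct (decay_bounds (t + 1) ltac:(lra)) as [M [_ [HM _]]].
  apply (continuous_of_cont_within _ (t/2) (t + 1)); [lra|].
  apply (int_R_param_sq_cont_within _ M); try lra.
  - intros s x Hs. apply (continuity_2d_dt_dx 0 1). lra.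
  - intros s x Hs. apply HM; auto; lra.
Qed.

Lemma energy_right_cont0 : forall eps : posreal, exists d : posreal,
  forall s, 0 <= s <= 1 -> s < d -> energy v s <= energy v 0 + eps.
Proof.
  intro eps. destruct (decay_bounds 1 ltac:(lra)) as [M [HM _]].
  destruct (int_R_param_sq_W0_cont_within v M 0 1 0 ltac:(lra)
    (fun t x _ => continuity_2d_v t x) HM eps) as [d Hd].
  exists d. intros s Hs Hsd.
  assert (Rabs (s - 0) < d) by (rewrite Rminus_0_r, Rabs_right; lra).
  specialize (Hd s Hs H). apply Rabs_def2 in Hd. unfold energy. lra.
Qed.

Lemma is_derive_phi x : is_derive phi x (Derive phi x).
Proof. apply Derive_correct. exact (Hphi_smooth 1%nat x). Qed.

Lemma cts_dphi : cts (Derive phi).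
Proof. apply cts_of_ex_derive. intro x. exact (Hphi_smooth 2%nat x). Qed.

Lemma drift_constants : exists D Bp, 0 <= D /\
  (forall x, W2 x + phi x * W1 x + nu * W3 x <= -1/2 + D * k1 x) /\
  (forall x, Rabs (phi x) <= Bp).
Proof.
  assert (Cph : cts phi) by (apply (cts_of_derive phi (Derive phi)), is_derive_phi).
  destruct (front_bounds phi Cph Hphi_m Hphi_p) as [R1 [B [HR1 [HB [Hb [Hp Hm]]]]]].
  exists ((2 + B + 3 * Rabs nu) * (1 + R1 ^ 2) + 15/8 + 3 * Rabs nu), B. repeat split; auto.
  - pose proof (Rabs_pos nu). assert (0 <= R1 ^ 2) by nra. nra.
  - apply weight_drift_le; auto.
Qed.

Definition Phi := int_R (fun x => Rabs (Derive phi x) * W0 x).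

Lemma Phi_ge0 : 0 <= Phi.
Proof.
  pose proof cts_dphi as Cd.
  assert (CdW : cts (fun x => Rabs (Derive phi x) * W0 x))
    by (apply cts_mult; [apply cts_abs; auto| apply cts_W0]).
  apply int_R_ge0; auto.
  - apply (integrable_R_dominated _ (hp (Derive phi))); auto using cts_hp, abs_dph_W0_le_hp.
  - intro x. pose proof (W0_pos x). pose proof (Rabs_pos (Derive phi x)). nra.
Qed.

Definition energy_rate (D : R) (t : R) :=
  -1/4 * L2sq (v t) + K1 D Phi (L2sq (v 0)) nu * L2sq (dx 1 v t)
  + K2 Phi (L2sq (v 0)) * Derive x0 t ^ 2.

Lemma continuous_energy_rate D t : 0 < t -> continuous (energy_rate D) t.
Proof.
  intros Ht. unfold energy_rate.
  assert (Hx : continuous (fun s => Derive x0 s ^ 2) t).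
  { apply (continuous_ext (fun y => Derive x0 y * (Derive x0 y * 1))); [intro; simpl; ring|].
    apply (continuous_mult (Derive x0)); [apply Hx0; lra|].
    apply (continuous_mult (Derive x0)); [apply Hx0; lra| apply continuous_const]. }
  apply continuous_lin3; auto using continuous_L2sq_v, continuous_L2sq_dx.
Qed.

Lemma int_energy_density_le D Bp : 0 <= D ->
  (forall x, W2 x + phi x * W1 x + nu * W3 x <= -1/2 + D * k1 x) ->
  (forall x, Rabs (phi x) <= Bp) ->
  forall t, 0 < t -> int_R (fun x => 2 * v t x * W0 x * dt 1 v t x) <= energy_rate D t.
Proof.
  intros HD Hc HBp t Ht.
  rewrite (int_R_ext _ (fun x => 2 * dx 0 v t x * W0 x *
      vt_rhs (dx 0 v t) (dx 1 v t) (dx 2 v t) (dx 3 v t) phi (Derive phi) (Derive x0 t) nu x)).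
  2: { intro x. unfold vt_rhs. specialize (Heq t x Ht).
       change (dx 0 v t x) with (v t x). f_equal. lra. }
  apply int_energy_rate_le; auto.
  1-3: intro; apply is_derive_dx.
  4: apply decays2_v; lra.
  4-6: apply decays2_dx; [lia| lra].
  - exact is_derive_phi.
  - exact cts_dphi.
  - split; [apply (cts_of_derive phi (Derive phi)), is_derive_phi| exists Bp; auto].
  - unfold Phi; lra.
  - apply L2sq_v_nonincreasing; lra.
Qed.

Lemma energy_increment_le D Bp : 0 <= D ->
  (forall x, W2 x + phi x * W1 x + nu * W3 x <= -1/2 + D * k1 x) ->
  (forall x, Rabs (phi x) <= Bp) ->
  forall s t, 0 < s <= t -> energy v t - energy v s <= RInt (energy_rate D) s t.
Proof.
  intros HD Hc HBp s t Hst.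
  destruct (decay_bounds t ltac:(lra)) as [M [HM0 [HMk HMt]]].
  assert (HM : 0 <= M) by (apply (decay_bound_nonneg (v 0 0) 0 M); apply HM0; lra).
  apply (int_R_increment_le (fun tau x => v tau x ^ 2 * W0 x)
           (fun tau x => 2 * v tau x * W0 x * dt 1 v tau x)
           (fun x => (M * M * 2) * k1 x) (energy_rate D) s t);
    auto using cts_scal, cts_k1, integrable_scal_k1.
  - intros tau x Htau. pose proof (is_derive_v_time tau x Htau) as Hd.
    auto_derive. exists (dt 1 v tau x); exact Hd.
    replace (Derive (fun s => v s x) tau) with (dt 1 v tau x)
      by (symmetry; apply is_derive_unique, Hd).
    ring.
  - intros tau x Htau.
    apply (continuity_2d_pt_mult (fun u y => 2 * v u y * W0 y) (fun u y => dt 1 v u y)).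
    apply (continuity_2d_pt_mult (fun u y => 2 * v u y) (fun u y => W0 y)).
    apply (continuity_2d_pt_mult (fun u y => 2) (fun u y => v u y)).
    apply continuity_2d_pt_const. apply continuity_2d_v. apply continuity_2d_pt_W0.
    apply (continuity_2d_dt_dx 1 0); auto.
  - intros tau Htau. apply cts_mult. apply cts_pow2, cts_v. apply cts_W0.
  - intros tau x Htau. replace (v tau x ^ 2 * W0 x) with (v tau x * v tau x * W0 x) by ring.
    eapply Rle_trans. apply decay_bound_prod_W0; apply HM0; lra.
    pose proof (k1_ge0 x). nra.
  - intros tau x Htau.
    replace (2 * v tau x * W0 x * dt 1 v tau x) with (2 * (v tau x * dt 1 v tau x * W0 x)) by ring.
    rewrite Rabs_mult, (Rabs_right 2) by lra.
    assert (Rabs (v tau x * dt 1 v tau x * W0 x) <= M * M * k1 x)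
      by (apply decay_bound_prod_W0; [apply HM0| apply HMt]; lra).
    lra.
  - apply (ex_RInt_continuous (V:=R_CompleteNormedModule)). intros z Hz.
    rewrite Rmin_left, Rmax_right in Hz by lra. apply continuous_energy_rate; lra.
  - intros tau Htau. apply (int_energy_density_le D Bp); auto. lra.
Qed.

Lemma ex_RInt_sub (f : R -> R) a b c d : a <= c <= d -> d <= b -> ex_RInt f a b -> ex_RInt f c d.
Proof.
  intros Hc Hd H.
  apply (ex_RInt_Chasles_1 (V:=R_CompleteNormedModule) f c d b); [lra|].
  apply (ex_RInt_Chasles_2 (V:=R_CompleteNormedModule) f a c b); [lra| auto].
Qed.

Lemma ex_RInt_sq_dx0 t : 0 < t -> ex_RInt (fun s => Derive x0 s ^ 2) 0 t.
Proof.
  intros Ht. apply (ex_RInt_ext (fun s => Rabs (Derive x0 s) ^ 2)); [| apply HC0; auto].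
  intros; apply pow2_abs.
Qed.

Lemma RInt_energy_rate D s t : 0 < s <= t ->
  RInt (energy_rate D) s t = -1/4 * RInt (fun s => L2sq (v s)) s t
    + K1 D Phi (L2sq (v 0)) nu * RInt (fun s => L2sq (dx 1 v s)) s t
    + K2 Phi (L2sq (v 0)) * RInt (fun s => Derive x0 s ^ 2) s t.
Proof.
  intros Hst.
  assert (Ia : ex_RInt (fun s => L2sq (v s)) s t)
    by (apply (ex_RInt_sub _ 0 t); [lra | lra | apply ex_RInt_L2sq_v; lra]).
  assert (Ib : ex_RInt (fun s => L2sq (dx 1 v s)) s t)
    by (apply (ex_RInt_sub _ 0 t); [lra | lra | apply HC0; lra]).
  assert (IX : ex_RInt (fun s => Derive x0 s ^ 2) s t)
    by (apply (ex_RInt_sub _ 0 t); [lra | lra | apply ex_RInt_sq_dx0; lra]).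
  unfold energy_rate. apply RInt_lin3; auto.
Qed.

(* The energy inequality on [[s, t]], with the dissipation [||v_x||^2] and the forcing
   [|dx0/dt|^2] bounded through their total integrals [<= C0]. *)
Lemma energy_increment_bound D Bp : 0 <= D ->
  (forall x, W2 x + phi x * W1 x + nu * W3 x <= -1/2 + D * k1 x) ->
  (forall x, Rabs (phi x) <= Bp) ->
  forall s t, 0 < s <= t ->
  energy v t + 1/4 * RInt (fun s => L2sq (v s)) s t
  <= energy v s + (K1 D Phi (L2sq (v 0)) nu + K2 Phi (L2sq (v 0))) * Rabs C0.
Proof.
  intros HD Hc HBp s t Hst.
  pose proof (energy_increment_le D Bp HD Hc HBp s t Hst) as HE.
  rewrite RInt_energy_rate in HE by lra.
  set (k1c := K1 D Phi (L2sq (v 0)) nu) in *. set (k2c := K2 Phi (L2sq (v 0))) in *.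
  assert (HA0 : 0 <= L2sq (v 0)) by (apply L2sq_v_ge0; lra).
  pose proof Phi_ge0.
  assert (Hk1 : 0 <= k1c).
  { unfold k1c, K1. pose proof (K0_ge0 D Phi (L2sq (v 0)) HD Phi_ge0 HA0). pose proof (Rabs_pos nu).
    nra. }
  assert (Hk2 : 0 <= k2c) by (unfold k2c, K2; lra).
  destruct (HC0 t ltac:(lra)) as [_ [Ib Hsum]].
  rewrite (RInt_ext (fun s => Rabs (Derive x0 s) ^ 2) (fun s => Derive x0 s ^ 2))
    in Hsum by (intros; apply pow2_abs).
  pose proof (ex_RInt_sq_dx0 t ltac:(lra)) as IX.
  set (b := fun s => L2sq (dx 1 v s)) in *. set (X := fun s => Derive x0 s ^ 2) in *.
  assert (Hb : forall u w, 0 <= u <= w -> w <= t -> 0 <= RInt b u w).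
  { intros u w Hu Hw. apply RInt_ge_0; [lra| apply (ex_RInt_sub _ 0 t); auto; lra|].
    intros; apply L2sq_dx_ge0; lra. }
  assert (HX : forall u w, 0 <= u <= w -> w <= t -> 0 <= RInt X u w).
  { intros u w Hu Hw. apply RInt_ge_0; [lra| apply (ex_RInt_sub _ 0 t); auto; lra|].
    intros; apply pow2_ge_0. }
  rewrite <- (RInt_Chasles (V:=R_CompleteNormedModule) b 0 s t),
    <- (RInt_Chasles (V:=R_CompleteNormedModule) X 0 s t) in Hsum
    by (apply (ex_RInt_sub _ 0 t); auto; lra).
  pose proof (Hb 0 s ltac:(lra) ltac:(lra)). pose proof (Hb s t ltac:(lra) ltac:(lra)).
  pose proof (HX 0 s ltac:(lra) ltac:(lra)). pose proof (HX s t ltac:(lra) ltac:(lra)).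
  pose proof (Rabs_bounds C0).
  change (RInt X 0 s + RInt X s t + (RInt b 0 s + RInt b s t) <= C0) in Hsum.
  assert (k1c * RInt b s t <= k1c * Rabs C0) by (apply Rmult_le_compat_l; lra).
  assert (k2c * RInt X s t <= k2c * Rabs C0) by (apply Rmult_le_compat_l; lra).
  lra.
Qed.

Lemma RInt_L2sq_v_le t : 0 <= t -> RInt (fun s => L2sq (v s)) 0 t <= t * L2sq (v 0).
Proof.
  intros Ht. destruct (Req_dec t 0) as [-> | Htn].
  - rewrite RInt_point. unfold zero; simpl. lra.
  - apply Rle_trans with (RInt (fun _ => L2sq (v 0)) 0 t).
    + apply RInt_le; [lra | apply ex_RInt_L2sq_v; lra | apply ex_RInt_const |].
      intros; apply L2sq_v_nonincreasing; lra.
    + rewrite RInt_const. unfold scal; simpl; unfold mult; simpl. lra.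
Qed.

(* Near [t = 0] the energy inequality is not available; there right continuity of the energy
   and [||v(s)||^2 <= ||v(0)||^2] take over. *)
Lemma energy_bound : exists Q, forall t, 0 < t ->
  energy v t + 1/4 * RInt (fun s => L2sq (v s)) 0 t <= Q.
Proof.
  destruct drift_constants as [D [Bp [HD [Hc HBp]]]].
  destruct (energy_right_cont0 (mkposreal 1 Rlt_0_1)) as [d Hd]. simpl in Hd.
  exists (energy v 0 + 1 + (K1 D Phi (L2sq (v 0)) nu + K2 Phi (L2sq (v 0))) * Rabs C0
          + L2sq (v 0) / 4).
  intros t Ht.
  set (s := Rmin (d / 2) (Rmin t 1)).
  assert (Hs : 0 < s /\ s <= t /\ s <= 1 /\ s < d).
  { unfold s. pose proof (Rmin_l (d/2) (Rmin t 1)). pose proof (Rmin_r (d/2) (Rmin t 1)).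
    pose proof (Rmin_l t 1). pose proof (Rmin_r t 1). pose proof (cond_pos d).
    repeat split; try lra. apply Rmin_pos; [lra| apply Rmin_pos; lra]. }
  pose proof (energy_increment_bound D Bp HD Hc HBp s t ltac:(lra)).
  pose proof (Hd s ltac:(lra) ltac:(lra)).
  pose proof (RInt_L2sq_v_le s ltac:(lra)).
  pose proof (L2sq_v_ge0 0 ltac:(lra)).
  rewrite <- (RInt_Chasles (V:=R_CompleteNormedModule) _ 0 s t)
    by (apply (ex_RInt_sub _ 0 t); auto using ex_RInt_L2sq_v; lra).
  change (plus ?a ?b) with (a + b).
  assert (s * L2sq (v 0) <= L2sq (v 0)) by nra.
  lra.
Qed.

Section EnergyBoundConsequences.

Variable Q : R.
Hypothesis HQ : forall t, 0 < t -> energy v t + 1/4 * RInt (fun s => L2sq (v s)) 0 t <= Q.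

Lemma RInt_L2sq_v_ge0 t : 0 < t -> 0 <= RInt (fun s => L2sq (v s)) 0 t.
Proof.
  intros Ht. apply RInt_ge_0; [lra| apply ex_RInt_L2sq_v; auto|].
  intros; apply L2sq_v_ge0; lra.
Qed.

Lemma energy_le t : 0 < t -> energy v t <= Q.
Proof. intros Ht. pose proof (HQ t Ht). pose proof (RInt_L2sq_v_ge0 t Ht). lra. Qed.

Lemma RInt_L2sq_v_le_Q t : 0 < t -> RInt (fun s => L2sq (v s)) 0 t <= 4 * Q.
Proof. intros Ht. pose proof (HQ t Ht). pose proof (energy_ge0 t ltac:(lra)). lra. Qed.

Lemma int_R_sq_v_abs_le_energy t : 0 < t ->
  integrable_R (fun x => v t x ^ 2 * Rabs x) /\ int_R (fun x => v t x ^ 2 * Rabs x) <= energy v t.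
Proof.
  intros Ht. pose proof (integrable_energy t ltac:(lra)) as IE.
  assert (CE : cts (fun x => v t x ^ 2 * W0 x))
    by (apply cts_mult; [apply cts_pow2, cts_v | apply cts_W0]).
  assert (C : cts (fun x => v t x ^ 2 * Rabs x))
    by (apply cts_mult; [apply cts_pow2, cts_v | apply cts_abs, cts_id]).
  assert (H : forall x, 0 <= v t x ^ 2 * Rabs x <= v t x ^ 2 * W0 x).
  { intro x. pose proof (W0_ge_abs x). pose proof (pow2_ge_0 (v t x)). pose proof (Rabs_pos x).
    split; nra. }
  assert (I : integrable_R (fun x => v t x ^ 2 * Rabs x)).
  { apply (integrable_R_dominated _ (fun x => v t x ^ 2 * W0 x)); auto.
    intro x. rewrite Rabs_right; [apply H| apply Rle_ge, H]. }
  split; auto. apply int_R_le; auto. apply H.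
Qed.

Lemma weighted_L2_bound : exists C : R, forall T, 0 < T ->
  ex_RInt (fun t => L2sq (v t)) 0 T /\
  forall t, 0 < t < T ->
    integrable_R (fun x => v t x ^ 2 * Rabs x) /\
    int_R (fun x => v t x ^ 2 * Rabs x) + RInt (fun s => L2sq (v s)) 0 T <= C.
Proof.
  exists (5 * Q). intros T HT. split; [apply ex_RInt_L2sq_v; auto|].
  intros t Ht. destruct (int_R_sq_v_abs_le_energy t ltac:(lra)) as [I E]. split; auto.
  pose proof (energy_le t ltac:(lra)). pose proof (RInt_L2sq_v_le_Q T HT). lra.
Qed.

(* Since [||v(s)||^2] is nonincreasing, [t ||v(t)||^2 <= int_0^t ||v(s)||^2 ds <= 4 Q]. *)
Lemma L2norm_decay : exists C, forall t, 0 < t -> L2norm (v t) <= C / sqrt t.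
Proof.
  exists (sqrt (4 * Q)). intros t Ht.
  assert (Hta : t * L2sq (v t) <= 4 * Q).
  { apply Rle_trans with (RInt (fun _ => L2sq (v t)) 0 t).
    - rewrite RInt_const. unfold scal; simpl; unfold mult; simpl. lra.
    - eapply Rle_trans; [| apply (RInt_L2sq_v_le_Q t Ht)].
      apply RInt_le; [lra | apply ex_RInt_const | apply ex_RInt_L2sq_v; auto |].
      intros y Hy. apply L2sq_v_nonincreasing. lra. }
  unfold L2norm. rewrite <- sqrt_div_alt by auto.
  apply sqrt_le_1_alt. apply (Rmult_le_reg_l t); auto.
  replace (t * (4 * Q / t)) with (4 * Q) by (field; lra). auto.
Qed.

Lemma Lp_bound p : 1 < p < 2 -> exists Cp, forall t, 0 < t ->
  integrable_R (fun x => rpow (Rabs (v t x)) p) /\ Lpnorm p (v t) <= Cp.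
Proof.
  intros Hp. eexists. intros t Ht.
  pose proof (integrable_sq_v t ltac:(lra)) as Ia.
  pose proof (integrable_energy t ltac:(lra)) as IE.
  assert (Ca : cts (fun x => v t x ^ 2)) by (apply cts_pow2, cts_v).
  assert (CE : cts (fun x => v t x ^ 2 * W0 x)) by (apply cts_mult; auto; apply cts_W0).
  set (Vw := fun x => v t x ^ 2 * (1 + Rabs x)).
  assert (CVw : cts Vw).
  { unfold Vw. apply cts_mult; auto. apply cts_plus; [apply cts_const| apply cts_abs, cts_id]. }
  destruct (int_R_plus _ _ Ca CE Ia IE) as [IaE EaE].
  assert (HVw : forall x, 0 <= Vw x <= v t x ^ 2 + v t x ^ 2 * W0 x).
  { intro x. unfold Vw. pose proof (W0_ge_abs x). pose proof (pow2_ge_0 (v t x)).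
    pose proof (Rabs_pos x). split; nra. }
  assert (IVw : integrable_R Vw).
  { apply (integrable_R_dominated _ (fun x => v t x ^ 2 + v t x ^ 2 * W0 x)); auto using cts_plus.
    intro x. rewrite Rabs_right; [apply HVw| apply Rle_ge, HVw]. }
  assert (HintVw : int_R Vw <= L2sq (v 0) + Q).
  { apply Rle_trans with (int_R (fun x => v t x ^ 2 + v t x ^ 2 * W0 x)).
    - apply int_R_le; auto using cts_plus. apply HVw.
    - rewrite EaE. pose proof (energy_le t Ht). pose proof (L2sq_v_nonincreasing 0 t ltac:(lra)).
      unfold energy, L2sq in *. lra. }
  exact (Lpnorm_le_weighted_L2 (v t) p _ Hp (cts_v t) IVw HintVw).
Qed.

End EnergyBoundConsequences.

End Solution.

Theorem mainTheorem2
  (nu : R) (phi : R -> R) (x0 : R -> R) (v : R -> R -> R)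
  (Hphi_smooth : forall n x, ex_derive_n phi n x)
  (Hphi_m : is_lim phi m_infty 1)
  (Hphi_p : is_lim phi p_infty (-1))
  (Hphi_L2 : integrable_R (fun x => (Derive phi x) ^ 2))
  (Hphi_L1w : integrable_R (fun x => (1 + Rabs x) * Rabs (Derive phi x)))
  (Hx0 : forall t, 0 <= t -> ex_derive x0 t /\ continuous (Derive x0) t)
  (Hreg : regular_solution v)
  (Heq : forall t x, 0 < t ->
     dt 1 v t x - dx 2 v t x - Derive x0 t * dx 1 v t x
     - Derive x0 t * Derive phi x + Derive phi x * v t x
     + phi x * dx 1 v t x + v t x * dx 1 v t x + nu * dx 3 v t x = 0)
  (Hinit : integrable_R (fun x => (Rabs (v 0 x)) ^ 2 * (1 + Rabs x)))
  (Hmono : forall s t, 0 <= s <= t -> L2norm (v t) <= L2norm (v s))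
  (HC0 : exists C0, forall t, 0 < t ->
     ex_RInt (fun s => (Rabs (Derive x0 s)) ^ 2) 0 t /\
     ex_RInt (fun s => L2sq (dx 1 v s)) 0 t /\
     RInt (fun s => (Rabs (Derive x0 s)) ^ 2) 0 t
       + RInt (fun s => L2sq (dx 1 v s)) 0 t <= C0) :
  (exists C, forall T, 0 < T ->
     ex_RInt (fun t => L2sq (v t)) 0 T /\
     forall t, 0 < t < T ->
       integrable_R (fun x => (v t x) ^ 2 * Rabs x) /\
       int_R (fun x => (v t x) ^ 2 * Rabs x)
         + RInt (fun s => L2sq (v s)) 0 T <= C)
  /\ (exists C, forall t, 0 < t -> L2norm (v t) <= C / sqrt t)
  /\ (forall p, 1 < p < 2 -> exists Cp, forall t, 0 < t ->
       integrable_R (fun x => rpow (Rabs (v t x)) p) /\ Lpnorm p (v t) <= Cp).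
Proof.
  destruct HC0 as [C0 HC].
  destruct (energy_bound nu phi x0 v C0 Hphi_smooth Hphi_m Hphi_p Hphi_L1w Hx0 Hreg Heq Hmono HC)
    as [Q HQ].
  split; [| split].
  - exact (weighted_L2_bound v Hreg Q HQ).
  - exact (L2norm_decay v Hreg Hmono Q HQ).
  - intros p Hp. exact (Lp_bound v Hreg Hmono Q HQ p Hp).
Qed.
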